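(* Fix $N\ge1$ and let $\mathit{PIPE}$ be the buffer of capacity $N+2$ defined below. Then $\mathit{PIPE}$ has no catastrophic cycle, its asymptotic performance is $2$, and for every $n\ge1$, $rp_{\mathit{PIPE}}(n)=2n+(N+1)$.
   Context: PAFAS setting. Let $\mathcal A$ be an infinite set of visible actions containing a distinguished success action $\omega$, the actions $in,out$, and all further action names used below (all pairwise distinct); $\tau\notin\mathcal A$ is the internal action and $\mathcal A_\tau=\mathcal A\cup\{\tau\}$. For every $\alpha\in\mathcal A_\tau$ there is an urgent version $\underline{\alpha}$. A general relabelling function is a map $\Phi:\mathcal A_\tau\to\mathcal A_\tau$ with $\Phi(\tau)=\tau$ such that $\{\alpha\mid \emptyset\neq\Phi^{-1}(\alpha)\neq\{\alpha\}\}$ is finite. Processes are the closed terms, guarded (every variable $x$ in $\mu x.P$ occurs only within the scope of some prefix), of the grammar $P::=\mathbf 0\mid \gamma.P\mid P+P\mid P\|_A P\mid P[\Phi]\mid x\mid \mu x.P$, where $\gamma\in\{\alpha,\underline\alpha\}$ for some $\alpha\in\mathcal A_\tau$, $A\subseteq\mathcal A$, $\Phi$ a general relabelling function; systems of defining equations $X\equiv\ldots$ abbreviate recursive $\mu$-terms, and a trailing $\mathbf 0$ may be omitted. There are action transitions $P\xrightarrow{\alpha}P'$ ($\alpha\in\mathcal A_\tau$) and time steps $P\xrightarrow{X}P'$ ($X\subseteq\mathcal A$), defined as the least relations closed under the rules: (1) $\alpha.P\xrightarrow{\alpha}P$ and $\underline\alpha.P\xrightarrow{\alpha}P$; (2)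 if $P_1\xrightarrow{\alpha}P_1'$ then $P_1+P_2\xrightarrow{\alpha}P_1'$ and $P_2+P_1\xrightarrow{\alpha}P_1'$; (3) if $\alpha\notin A$ and $P_1\xrightarrow{\alpha}P_1'$ then $P_1\|_AP_2\xrightarrow{\alpha}P_1'\|_AP_2$ and $P_2\|_AP_1\xrightarrow{\alpha}P_2\|_AP_1'$; (4) if $\alpha\in A$, $P_1\xrightarrow{\alpha}P_1'$, $P_2\xrightarrow{\alpha}P_2'$ then $P_1\|_AP_2\xrightarrow{\alpha}P_1'\|_AP_2'$; (5) if $P\xrightarrow{\alpha}P'$ then $P[\Phi]\xrightarrow{\Phi(\alpha)}P'[\Phi]$; (6) if $P\{\mu x.P/x\}\xrightarrow{\alpha}P'$ then $\mu x.P\xrightarrow{\alpha}P'$; (7) $\mathbf 0\xrightarrow{X}\mathbf 0$; (8) $\alpha.P\xrightarrow{X}\underline\alpha.P$; (9) if $\alpha\notin X\cup\{\tau\}$ then $\underline\alpha.P\xrightarrow{X}\underline\alpha.P$; (10) if $P_i\xrightarrow{X_i}P_i'$ for $i=1,2$ and $X\subseteq (A\cap(X_1\cup X_2))\cup((X_1\cap X_2)\setminus A)$ then $P_1\|_AP_2\xrightarrow{X}P_1'\|_AP_2'$; (11) if $P_1\xrightarrow{X}P_1'$ and $P_2\xrightarrow{X}P_2'$ then $P_1+P_2\xrightarrow{X}P_1'+P_2'$; (12) if $P\xrightarrow{\Phi^{-1}(X\cup\{\tau\})\setminus\{\tau\}}P'$ then $P[\Phi]\xrightarrow{X}P'[\Phi]$;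 (13) if $P\{\mu x.P/x\}\xrightarrow{X}P'$ then $\mu x.P\xrightarrow{X}P'\{\mu x.P/x\}$. A full time step is a time step with $X=\mathcal A$, written $\xrightarrow{1}$. $P\|Q$ abbreviates $P\|_{\mathcal A\setminus\{\omega\}}Q$, and for $B\subseteq\mathcal A$, $P/B$ denotes $P[\Phi_B]$ with $\Phi_B(\alpha)=\tau$ for $\alpha\in B$ and $\Phi_B(\alpha)=\alpha$ otherwise. The set $\mathrm{DL}(P)$ of discrete traces consists of all sequences obtained from a sequence $w\in(\mathcal A_\tau\cup\{1\})^*$ of consecutive action transitions and full time steps starting at $P$ by deleting all $\tau$'s; for such a $v$, $\zeta(v)$ is the number of occurrences of $1$ in $v$. Users: $U_1\equiv\underline{in}.\underline{out}.\underline{\omega}$ and $U_n\equiv U_{n-1}\|_{\{\omega\}}\underline{in}.\underline{out}.\underline{\omega}$ for $n>1$. The response performance of $P$ is $rp_P(n)=\sup\{\zeta(v)\mid v\in\mathrm{DL}(P\|U_n),\ \omega\text{ does not occur in }v\}\in\mathbb N_0\cup\{\infty\}$ for $n\ge1$. A catastrophic cycle of $P$ is a cycle, in the transition graph of processes reachable from $P$ (restricted to transitions that can participate in a full time step when $P$ runs in parallel with some $U_n$), that contains at least one time step but no $in$ and no $out$ transition; the asymptotic performance is the constant $a$ with $rp_P(n)=an+\Theta(1)$. Definition of PIPE: let $C\equiv in.C'$, $C'\equiv out.C$. For $i=0,\dots,N+1$ let $C_i\equiv C[\Phi_i]$ where $\Phi_i(in)=\delta_i$ if $0\le i\le N$,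 $\Phi_i(out)=\delta_{i-1}$ if $1\le i\le N+1$, and $\Phi_i(\alpha)=\alpha$ otherwise ($\delta_0,\dots,\delta_N$ are fresh visible actions). With $A=\{\delta_0,\dots,\delta_N\}$, $\mathit{PIPE}\equiv\big(\cdots((C_0\|_{\{\delta_0\}}C_1)\|_{\{\delta_1\}}C_2)\cdots\|_{\{\delta_N\}}C_{N+1}\big)/A$. *)

From Stdlib Require Import List Arith Lia QArith Qabs.
Import ListNotations.
Open Scope nat_scope.

(* The infinite set of visible actions: omega, in, out, the fresh actions
   delta_i, and infinitely many further actions (all pairwise distinct). *)
Inductive Act : Type :=
| omega
| act_in
| act_out
| delta (i : nat)
| other (k : nat).

Inductive ActT : Type :=
| tau
| vis (a : Act).

Definition ASet := Act -> Prop.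

Definition fullset : ASet := fun _ => True.

Definition inA (A : ASet) (a : ActT) : Prop :=
  match a with tau => False | vis b => A b end.

(* Pre false a P = a.P ; Pre true a P = (urgent a).P ;
   Par A P Q = P ||_A Q ; Rel f P = P[f] ; Mu x P = mu x. P *)
Inductive Proc : Type :=
| Nil
| Pre (urgent : bool) (a : ActT) (P : Proc)
| Sum (P Q : Proc)
| Par (A : ASet) (P Q : Proc)
| Rel (f : ActT -> ActT) (P : Proc)
| Var (x : nat)
| Mu (x : nat) (P : Proc).

(* general relabelling functions (side condition of the grammar) *)
Definition general_relabelling (f : ActT -> ActT) : Prop :=
  f tau = tau /\
  exists l : list Act, forall a : Act,
    ((exists b, f (vis b) = vis a) /\ ~ (forall b, f (vis b) = vis a <-> b = a)) ->
    In a l.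

(* substitution P{Q/x} (only used with closed Q) *)
Fixpoint subst (x : nat) (Q0 : Proc) (P : Proc) : Proc :=
  match P with
  | Nil => Nil
  | Pre u a P1 => Pre u a (subst x Q0 P1)
  | Sum P1 P2 => Sum (subst x Q0 P1) (subst x Q0 P2)
  | Par A P1 P2 => Par A (subst x Q0 P1) (subst x Q0 P2)
  | Rel f P1 => Rel f (subst x Q0 P1)
  | Var y => if Nat.eqb x y then Q0 else Var y
  | Mu y P1 => if Nat.eqb x y then Mu y P1 else Mu y (subst x Q0 P1)
  end.

Inductive astep : Proc -> ActT -> Proc -> Prop :=
| as_pre : forall u a P, astep (Pre u a P) a P
| as_suml : forall a P1 P1' P2, astep P1 a P1' -> astep (Sum P1 P2) a P1'
| as_sumr : forall a P1 P1' P2, astep P1 a P1' -> astep (Sum P2 P1) a P1'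
| as_parl : forall A a P1 P1' P2,
    ~ inA A a -> astep P1 a P1' -> astep (Par A P1 P2) a (Par A P1' P2)
| as_parr : forall A a P1 P1' P2,
    ~ inA A a -> astep P1 a P1' -> astep (Par A P2 P1) a (Par A P2 P1')
| as_sync : forall (A : ASet) b P1 P1' P2 P2',
    A b -> astep P1 (vis b) P1' -> astep P2 (vis b) P2' ->
    astep (Par A P1 P2) (vis b) (Par A P1' P2')
| as_rel : forall f a P P', astep P a P' -> astep (Rel f P) (f a) (Rel f P')
| as_mu : forall x a P P', astep (subst x (Mu x P) P) a P' -> astep (Mu x P) a P'.

Inductive tstep : Proc -> ASet -> Proc -> Prop :=
| ts_nil : forall X, tstep Nil X Nil
| ts_pre : forall X a P, tstep (Pre false a P) X (Pre true a P)
| ts_urg : forall X a P, a <> tau -> ~ inA X a ->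
    tstep (Pre true a P) X (Pre true a P)
| ts_par : forall (A X X1 X2 : ASet) P1 P1' P2 P2',
    tstep P1 X1 P1' -> tstep P2 X2 P2' ->
    (forall b, X b -> (A b /\ (X1 b \/ X2 b)) \/ (X1 b /\ X2 b /\ ~ A b)) ->
    tstep (Par A P1 P2) X (Par A P1' P2')
| ts_sum : forall X P1 P1' P2 P2',
    tstep P1 X P1' -> tstep P2 X P2' -> tstep (Sum P1 P2) X (Sum P1' P2')
| ts_rel : forall f X P P',
    (* f^{-1}(X u {tau}) \ {tau} *)
    tstep P (fun b => f (vis b) = tau \/ inA X (f (vis b))) P' ->
    tstep (Rel f P) X (Rel f P')
| ts_mu : forall x X P P',
    tstep (subst x (Mu x P) P) X P' ->
    tstep (Mu x P) X (subst x (Mu x P) P').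

Definition fstep (P P' : Proc) : Prop := tstep P fullset P'.

Inductive DItem : Type :=
| DAct (a : Act)
| DOne.

Inductive DL : Proc -> list DItem -> Prop :=
| dl_nil : forall P, DL P []
| dl_tau : forall P P' v, astep P tau P' -> DL P' v -> DL P v
| dl_vis : forall P a P' v, astep P (vis a) P' -> DL P' v -> DL P (DAct a :: v)
| dl_time : forall P P' v, fstep P P' -> DL P' v -> DL P (DOne :: v).

Fixpoint zeta (v : list DItem) : nat :=
  match v with
  | [] => 0
  | DOne :: w => S (zeta w)
  | DAct _ :: w => zeta w
  end.

Definition notOmega : ASet := fun b => b <> omega.
Definition onlyOmega : ASet := fun b => b = omega.

(* P || Q = P ||_{A \ {omega}} Q *)
Definition parT (P P2 : Proc) : Proc := Par notOmega P P2.

Definition user1 : Proc :=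
  Pre true (vis act_in) (Pre true (vis act_out) (Pre true (vis omega) Nil)).

(* U n = U_n for n >= 1 (U 0 is an irrelevant dummy) *)
Fixpoint U (n : nat) : Proc :=
  match n with
  | 0 => user1
  | S m => match m with
           | 0 => user1
           | S _ => Par onlyOmega (U m) user1
           end
  end.

Inductive natinf : Type :=
| fin (k : nat)
| inf.

Definition le_ni (x y : natinf) : Prop :=
  match x, y with
  | _, inf => True
  | inf, fin _ => False
  | fin a, fin b => a <= b
  end.

Definition is_sup (S : nat -> Prop) (r : natinf) : Prop :=
  (forall k, S k -> le_ni (fin k) r) /\
  (forall r', (forall k, S k -> le_ni (fin k) r') -> le_ni r r').

Definition rp_set (P : Proc) (n : nat) (k : nat) : Prop :=
  exists v, DL (parT P (U n)) v /\ ~ In (DAct omega) v /\ zeta v = k.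

(* rp P n r  <->  rp_P(n) = r *)
Definition rp (P : Proc) (n : nat) (r : natinf) : Prop :=
  is_sup (rp_set P n) r.

(* rp_P(n) = a n + Theta(1) *)
Definition asymptotic_performance (P : Proc) (a : Q) : Prop :=
  exists (c1 c2 : Q) (n0 : nat),
    (0 < c1)%Q /\
    forall n : nat, 1 <= n -> n0 <= n ->
      exists k : nat, rp P n (fin k) /\
        (c1 <= Qabs (inject_Z (Z.of_nat k) - a * inject_Z (Z.of_nat n)) <= c2)%Q.

Inductive reach_nw : Proc -> Proc -> Prop :=
| rn_refl : forall S, reach_nw S S
| rn_act : forall S a S' T, astep S a S' -> a <> vis omega ->
    reach_nw S' T -> reach_nw S T
| rn_time : forall S S' T, fstep S S' -> reach_nw S' T -> reach_nw S T.

Definition joint_reach (P Q0 R : Proc) : Prop :=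
  exists n, 1 <= n /\ reach_nw (parT P (U n)) (parT Q0 R).

(* time steps X (of P) and X2 (of the users) combine, via rule (10) with
   synchronisation set A \ {omega}, to a full time step *)
Definition full_comb (X X2 : ASet) : Prop :=
  forall b, (b <> omega /\ (X b \/ X2 b)) \/ (X b /\ X2 b /\ b = omega).

Inductive Lab : Type :=
| LA (a : ActT)
| LT (X : ASet).

Definition admissible (P Q0 : Proc) (l : Lab) (Q1 : Proc) : Prop :=
  match l with
  | LA a => astep Q0 a Q1 /\
      exists R, joint_reach P Q0 R /\
        (a = tau \/ exists b R', a = vis b /\ b <> omega /\ astep R (vis b) R')
  | LT X => tstep Q0 X Q1 /\
      exists R X2 R', joint_reach P Q0 R /\ tstep R X2 R' /\ full_comb X X2
  end.

Inductive apath (P : Proc) : Proc -> list Lab -> Proc -> Prop :=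
| ap_nil : forall Q0, apath P Q0 [] Q0
| ap_cons : forall Q0 l Q1 ls Q2,
    admissible P Q0 l Q1 -> apath P Q1 ls Q2 -> apath P Q0 (l :: ls) Q2.

Definition is_time (l : Lab) : Prop :=
  match l with LT _ => True | LA _ => False end.

Definition is_inout (l : Lab) : Prop :=
  l = LA (vis act_in) \/ l = LA (vis act_out).

Definition has_catastrophic_cycle (P : Proc) : Prop :=
  exists Q0 pre ls,
    apath P P pre Q0 /\ apath P Q0 ls Q0 /\
    (exists l, In l ls /\ is_time l) /\
    (forall l, In l ls -> ~ is_inout l).

Definition C : Proc :=
  Mu 0 (Pre false (vis act_in) (Pre false (vis act_out) (Var 0))).

Definition phi (N i : nat) (a : ActT) : ActT :=
  match a with
  | vis act_in => if i <=? N then vis (delta i) else vis act_in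
  | vis act_out => if 1 <=? i then vis (delta (i - 1)) else vis act_out
  | _ => a
  end.

Definition Ci (N i : nat) : Proc := Rel (phi N i) C.

Fixpoint chain (N k : nat) : Proc :=
  match k with
  | 0 => Ci N 0
  | S j => Par (fun b => b = delta j) (chain N j) (Ci N (S j))
  end.

(* hiding of {delta_0, ..., delta_N} *)
Definition hideD (N : nat) (a : ActT) : ActT :=
  match a with
  | vis (delta i) => if i <=? N then tau else a
  | _ => a
  end.

Definition PIPE (N : nat) : Proc := Rel (hideD N) (chain N (S N)).

(* The states of PIPE reachable by the test are described concretely: each
   cell i = 0 .. N+1 is empty or full and its pending action is urgent or not
   (a configuration), and each user is in phase 0 (waiting for in), 1 (waiting
   for out) or done.

   The core is a potential pot c a on configurations (a = inputs still to
   come): the maximum over positions j of j + 2 (load - 1) + slack, where the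
   load counts the items that still have to pass position j.  Actions never
   increase it, urgent actions preserve it, and a full time step decreases it
   by exactly one.  Hence every omega-free trace has at most pot time steps,
   and a greedy user strategy (urgent actions first, then let time pass)
   attains pot; initially pot = 2n + N + 1.  Finally, along transitions other
   than in and out, 3 * (weight of the items) + (number of non-urgent cells)
   strictly decreases, which excludes catastrophic cycles. *)

From Stdlib Require Import List Arith QArith.
From Stdlib Require Import Lia Qabs Classical.
Import ListNotations.
Open Scope nat_scope.

Lemma tstep_antitone P (X : ASet) P' :
  tstep P X P' -> forall Y : ASet, (forall b, Y b -> X b) -> tstep P Y P'.
Proof.
  induction 1; intros Y HY.
  - apply ts_nil.
  - apply ts_pre.
  - apply ts_urg; auto. destruct a; simpl in *; auto.
  - eapply ts_par; eauto.
  - apply ts_sum; auto.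
  - apply ts_rel. apply IHtstep. intros b [Hb | Hb]; [left; auto | right].
    destruct (f (vis b)); simpl in *; auto.
  - apply ts_mu. auto.
Qed.

(* The state of one buffer cell: whether it holds an item, and whether its
   pending action has been made urgent by a time step. *)
Record cell : Type := Cell { full : bool; urgent : bool }.

Definition pending (s : cell) : Act := if full s then act_out else act_in.
Definition flip (s : cell) : cell := Cell (negb (full s)) false.
Definition ripen (s : cell) : cell := Cell (full s) true.

Definition cell_body (s : cell) : Proc :=
  match s with
  | Cell false false => C
  | Cell false true => Pre true (vis act_in) (Pre false (vis act_out) C)
  | Cell true false => Pre false (vis act_out) C
  | Cell true true => Pre true (vis act_out) C
  end.

Lemma cell_body_astep s a P' :
  astep (cell_body s) a P' <-> a = vis (pending s) /\ P' = cell_body (flip s).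
Proof.
  split.
  - destruct s as [[] []]; simpl; intro H; inversion H; subst; auto.
    match goal with H : astep _ _ _ |- _ => simpl in H; inversion H; subst end; auto.
  - intros [-> ->]. destruct s as [[] []]; simpl;
      first [apply as_pre | apply as_mu; apply as_pre].
Qed.

Lemma cell_body_tstep s (X : ASet) P' :
  tstep (cell_body s) X P' <->
  P' = cell_body (ripen s) /\ (urgent s = true -> ~ X (pending s)).
Proof.
  split.
  - destruct s as [[] []]; simpl; intro H; inversion H; subst;
      try (split; [reflexivity | congruence]).
    + split; [reflexivity | auto].
    + split; [reflexivity | auto].
    + match goal with H : tstep _ _ _ |- _ => simpl in H; inversion H; subst end.
      split; [reflexivity | congruence].
  - intros [-> H]. destruct s as [[] []]; simpl in *.
    + apply ts_urg; [congruence | apply H; reflexivity].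
    + apply ts_pre.
    + apply ts_urg; [congruence | apply H; reflexivity].
    + change (Pre true (vis act_in) (Pre false (vis act_out) C)) with
        (subst 0 C (Pre true (vis act_in) (Pre false (vis act_out) C))).
      apply ts_mu, ts_pre.
Qed.

(* Cell i of the pipe reads from delta_i (act_in for the last cell) and
   writes to delta_(i-1) (act_out for cell 0). *)
Definition inlab (N i : nat) : Act := if i <=? N then delta i else act_in.
Definition outlab (i : nat) : Act := match i with 0 => act_out | S j => delta j end.
Definition port (N i : nat) (s : cell) : Act := if full s then outlab i else inlab N i.

Lemma inlab_le N i : i <= N -> inlab N i = delta i.
Proof. intro H. unfold inlab. destruct (Nat.leb_spec i N); [reflexivity | lia]. Qed.

Lemma inlab_last N : inlab N (S N) = act_in.
Proof. unfold inlab. destruct (Nat.leb_spec (S N) N); [lia | reflexivity]. Qed.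

Lemma inlab_delta N i j : inlab N i = delta j -> i = j.
Proof. unfold inlab. destruct (i <=? N); congruence. Qed.

Lemma phi_pending N i s : phi N i (vis (pending s)) = vis (port N i s).
Proof.
  unfold pending, port, phi, inlab, outlab.
  destruct (full s); [destruct i; simpl; rewrite ?Nat.sub_0_r | destruct (i <=? N)];
    reflexivity.
Qed.

Definition cell_proc (N i : nat) (s : cell) : Proc := Rel (phi N i) (cell_body s).

Lemma cell_astep N i s a P' :
  astep (cell_proc N i s) a P' <-> a = vis (port N i s) /\ P' = cell_proc N i (flip s).
Proof.
  split.
  - intro H. inversion H as [| | | | | | f a0 P0 P0' H0 |]; subst.
    apply cell_body_astep in H0 as [-> ->]. rewrite phi_pending. auto.
  - intros [-> ->]. rewrite <- phi_pending. apply as_rel, cell_body_astep. auto.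
Qed.

Lemma cell_tstep N i s (X : ASet) P' :
  tstep (cell_proc N i s) X P' <->
  P' = cell_proc N i (ripen s) /\ (urgent s = true -> ~ X (port N i s)).
Proof.
  split.
  - intro H. inversion H as [| | | | | f X0 P0 P0' H0 |]; subst.
    apply cell_body_tstep in H0 as [-> H0]. split; [reflexivity |].
    intros Hu HX. apply (H0 Hu). right. rewrite phi_pending. exact HX.
  - intros [-> H]. apply ts_rel, cell_body_tstep. split; [reflexivity |].
    intros Hu [Ht | HX]; rewrite phi_pending in *; [discriminate | exact (H Hu HX)].
Qed.

(* A configuration of the pipe gives the state of every cell 0 .. N+1. *)
Definition config : Type := nat -> cell.

Definition upd (c : config) (i : nat) (s : cell) : config :=
  fun j => if j =? i then s else c j.

Definition shift (c : config) (j : nat) : config :=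
  upd (upd c j (Cell true false)) (S j) (Cell false false).

Definition ripen_all (c : config) : config := fun j => ripen (c j).

Lemma upd_eq c i s : upd c i s i = s.
Proof. unfold upd. rewrite Nat.eqb_refl. reflexivity. Qed.

Lemma upd_ne c i s j : j <> i -> upd c i s j = c j.
Proof. intro H. unfold upd. destruct (Nat.eqb_spec j i); [lia | reflexivity]. Qed.

Ltac upd_simpl :=
  unfold shift, upd;
  repeat match goal with |- context [?x =? ?y] =>
    destruct (Nat.eqb_spec x y); try (exfalso; lia) end;
  try reflexivity.

Lemma flip_full s : full s = true -> flip s = Cell false false.
Proof. unfold flip. intros ->. reflexivity. Qed.

Lemma flip_empty s : full s = false -> flip s = Cell true false.
Proof. unfold flip. intros ->. reflexivity. Qed.

Fixpoint chain_of (N k : nat) (c : config) : Proc :=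
  match k with
  | 0 => cell_proc N 0 (c 0)
  | S j => Par (fun b => b = delta j) (chain_of N j c) (cell_proc N (S j) (c (S j)))
  end.

Lemma chain_of_ext N k c c' : (forall i, i <= k -> c i = c' i) -> chain_of N k c = chain_of N k c'.
Proof.
  induction k; intro H; simpl.
  - rewrite H; auto.
  - rewrite IHk by (intros; apply H; lia). rewrite H; auto.
Qed.

Definition urgent_transfer (c : config) (j : nat) : Prop :=
  c j = Cell false true /\ c (S j) = Cell true true.

Lemma chain_astep N k c a P' : k <= S N -> astep (chain_of N k c) a P' ->
  (exists j, j < k /\ full (c j) = false /\ full (c (S j)) = true /\
     a = vis (delta j) /\ P' = chain_of N k (shift c j)) \/
  (full (c k) = false /\ a = vis (inlab N k) /\ P' = chain_of N k (upd c k (Cell true false))) \/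
  (full (c 0) = true /\ a = vis act_out /\ P' = chain_of N k (upd c 0 (Cell false false))).
Proof.
  revert a P'. induction k as [|k IH]; intros a P' Hk H; simpl in H.
  - apply cell_astep in H as [-> ->]. unfold port; simpl.
    destruct (full (c 0)) eqn:F; [right; right | right; left];
      rewrite ?flip_full, ?flip_empty by auto; simpl; upd_simpl; auto.
  - inversion H as [| | | ? ? ? ? ? Hn H1 | ? ? ? ? ? Hn H1 | ? b ? ? ? ? Hb H1 H2 | |]; subst.
    + apply IH in H1 as [(j & Hj & F1 & F2 & -> & ->) | [(F & -> & ->) | (F & -> & ->)]];
        [| | | lia].
      * left. exists j. repeat split; auto; try lia. simpl. upd_simpl.
      * exfalso. apply Hn. simpl. rewrite inlab_le by lia. reflexivity.
      * right; right. repeat split; auto.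
    + apply cell_astep in H1 as [-> ->]. unfold port in *.
      destruct (full (c (S k))) eqn:F; [exfalso; apply Hn; reflexivity |].
      right; left. repeat split; auto. simpl. rewrite flip_empty by auto. upd_simpl.
      f_equal. apply chain_of_ext. intros i Hi. upd_simpl.
    + apply cell_astep in H2 as [Eb ->]. injection Eb as Eb. unfold port in Eb.
      destruct (full (c (S k))) eqn:F; [| symmetry in Eb; apply inlab_delta in Eb; lia].
      apply IH in H1 as [(j & Hj & _ & _ & E & _) | [(F0 & E & ->) | (_ & E & _)]];
        [injection E; lia | | discriminate | lia].
      left. exists k. repeat split; auto. simpl. rewrite flip_full by auto. upd_simpl.
      f_equal. apply chain_of_ext. intros i Hi. upd_simpl.
Qed.

Lemma chain_tstep N k c (X : ASet) P' : k <= S N -> tstep (chain_of N k c) X P' ->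
  P' = chain_of N k (ripen_all c) /\
  (forall j, j < k -> urgent_transfer c j -> ~ X (delta j)) /\
  (c k = Cell false true -> ~ X (inlab N k)) /\
  (c 0 = Cell true true -> ~ X act_out).
Proof.
  revert X P'. induction k as [|k IH]; intros X P' Hk H; simpl in H.
  - apply cell_tstep in H as [-> H]. repeat split; [intros j Hj; lia | |];
      intro E; rewrite E in H; exact (H eq_refl).
  - inversion H as [| | | ? ? X1 X2 ? ? ? ? H1 H2 HX | | | ]; subst.
    apply IH in H1 as (-> & HI1 & HI2 & HI3); [| lia].
    apply cell_tstep in H2 as [-> HC].
    repeat split.
    + intros j Hj [E1 E2] HXj.
      destruct (HX _ HXj) as [[Ha [Hb | Hb]] | (Hb1 & Hb2 & Hb3)].
      * injection Ha as ->. apply (HI2 E1). rewrite inlab_le by lia. exact Hb.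
      * injection Ha as ->. rewrite E2 in HC. exact (HC eq_refl Hb).
      * assert (j < k \/ j = k) as [Hjk | ->] by lia.
        -- exact (HI1 j Hjk (conj E1 E2) Hb1).
        -- exact (Hb3 eq_refl).
    + intros E HXi. rewrite E in HC. destruct (HX _ HXi) as [[Ha _] | (_ & Hb2 & _)].
      * apply inlab_delta in Ha. lia.
      * exact (HC eq_refl Hb2).
    + intros E HXo. destruct (HX _ HXo) as [[Ha _] | (Hb1 & _)]; [discriminate |].
      exact (HI3 E Hb1).
Qed.

(* the largest set of actions a chain without urgent internal transfers can refuse *)
Definition chain_refusal (N k : nat) (c : config) : ASet := fun b =>
  ~ (b = inlab N k /\ c k = Cell false true) /\ ~ (b = act_out /\ c 0 = Cell true true).

Lemma chain_tstep_ex N k c : k <= S N -> (forall j, j < k -> ~ urgent_transfer c j) ->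
  tstep (chain_of N k c) (chain_refusal N k c) (chain_of N k (ripen_all c)).
Proof.
  induction k as [|k IH]; intros Hk HE; simpl.
  - apply cell_tstep. split; [reflexivity |]. unfold chain_refusal, port, outlab.
    destruct (c 0) as [[] []]; simpl; intros Hu [H1 H2]; try discriminate.
    + apply H2; auto.
    + apply H1; auto.
  - apply ts_par with (X1 := chain_refusal N k c)
      (X2 := fun b => ~ (urgent (c (S k)) = true /\ b = port N (S k) (c (S k)))).
    + apply IH; [lia |]. intros j Hj; apply HE; lia.
    + apply cell_tstep. split; [reflexivity |]. intros Hu HH; apply HH; auto.
    + intros b [Hb1 Hb2]. unfold chain_refusal.
      assert (Hen := HE k ltac:(lia)). unfold urgent_transfer in Hen.
      rewrite inlab_le in * by lia.
      destruct (classic (b = delta k)) as [-> | Hne].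
      * left. split; [reflexivity |].
        destruct (c k) as [[] []] eqn:Ek; destruct (c (S k)) as [[] []] eqn:ESk;
          unfold port, outlab in *; simpl;
          try (left; split; intros [? ?]; congruence);
          try (right; intros [? ?]; congruence);
          try (right; intros [_ Hx]; symmetry in Hx; apply inlab_delta in Hx; lia).
        exfalso; apply Hen; auto.
      * right. split; [| split; [| exact Hne]].
        -- split; [intros [? ?]; congruence | exact Hb2].
        -- intros [Hu Hl]. destruct (c (S k)) as [[] y] eqn:E; simpl in *;
             unfold port, outlab in Hl; simpl in Hl; [congruence |].
           subst. apply Hb1. auto.
Qed.

Lemma chain_in_ex N k c : k <= S N -> full (c k) = false ->
  astep (chain_of N k c) (vis (inlab N k)) (chain_of N k (upd c k (Cell true false))).
Proof.
  destruct k as [|k]; intros Hk H; simpl.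
  - rewrite upd_eq, <- (flip_empty (c 0)) by auto. apply cell_astep. unfold port. rewrite H. auto.
  - replace (chain_of N k (upd c (S k) (Cell true false))) with (chain_of N k c)
      by (apply chain_of_ext; intros; upd_simpl).
    rewrite upd_eq, <- (flip_empty (c (S k))) by auto.
    apply as_parr.
    + simpl. intro E. apply inlab_delta in E. lia.
    + apply cell_astep. unfold port. rewrite H. auto.
Qed.

Lemma chain_out_ex N k c : full (c 0) = true ->
  astep (chain_of N k c) (vis act_out) (chain_of N k (upd c 0 (Cell false false))).
Proof.
  induction k; intros H; simpl.
  - rewrite upd_eq, <- (flip_full (c 0)) by auto. apply cell_astep. unfold port. rewrite H. auto.
  - rewrite upd_ne by lia. apply as_parl; [simpl; discriminate |]. apply IHk; auto.
Qed.

Lemma chain_shift_ex N k c j : k <= S N -> j < k -> full (c j) = false -> full (c (S j)) = true ->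
  astep (chain_of N k c) (vis (delta j)) (chain_of N k (shift c j)).
Proof.
  induction k; intros Hk Hj H1 H2; [lia |]. simpl.
  assert (j < k \/ j = k) as [Hjk | ->] by lia.
  - replace (shift c j (S k)) with (c (S k)) by (upd_simpl).
    apply as_parl; [simpl; intro E; injection E; lia |]. apply IHk; auto; lia.
  - replace (chain_of N k (shift c k)) with (chain_of N k (upd c k (Cell true false)))
      by (apply chain_of_ext; intros; upd_simpl).
    replace (shift c k (S k)) with (flip (c (S k))) by (upd_simpl; apply flip_full; auto).
    apply as_sync; [reflexivity | |].
    + rewrite <- (inlab_le N k) by lia. apply chain_in_ex; auto; lia.
    + apply cell_astep. unfold port. rewrite H2. auto.
Qed.

Definition pipe (N : nat) (c : config) : Proc := Rel (hideD N) (chain_of N (S N) c).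

Definition empty_config : config := fun _ => Cell false false.

Lemma PIPE_empty N : PIPE N = pipe N empty_config.
Proof.
  unfold PIPE, pipe. f_equal. generalize (S N). induction n; simpl; auto.
  rewrite IHn. reflexivity.
Qed.

Lemma hideD_delta N j : j <= N -> hideD N (vis (delta j)) = tau.
Proof. intro H. simpl. destruct (Nat.leb_spec j N); [reflexivity | lia]. Qed.

Lemma pipe_astep N c a P' : astep (pipe N c) a P' ->
  (exists j, j <= N /\ full (c j) = false /\ full (c (S j)) = true /\
     a = tau /\ P' = pipe N (shift c j)) \/
  (full (c (S N)) = false /\ a = vis act_in /\ P' = pipe N (upd c (S N) (Cell true false))) \/
  (full (c 0) = true /\ a = vis act_out /\ P' = pipe N (upd c 0 (Cell false false))).
Proof.
  intro H. inversion H as [| | | | | | ? a0 ? P0 H0 |]; subst.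
  apply (chain_astep N (S N)) in H0
    as [(j & Hj & F1 & F2 & -> & ->) | [(F & -> & ->) | (F & -> & ->)]]; [| | | lia].
  - left. exists j. repeat split; auto; try lia. apply hideD_delta. lia.
  - right; left. rewrite inlab_last. auto.
  - right; right. auto.
Qed.

Lemma pipe_tstep N c (X : ASet) P' : tstep (pipe N c) X P' ->
  P' = pipe N (ripen_all c) /\ (forall j, j <= N -> ~ urgent_transfer c j) /\
  (c (S N) = Cell false true -> ~ X act_in) /\ (c 0 = Cell true true -> ~ X act_out).
Proof.
  intro H. inversion H as [| | | | | ? ? ? P0 H0 |]; subst.
  apply (chain_tstep N (S N)) in H0 as (-> & HI1 & HI2 & HI3); [| lia].
  repeat split.
  - intros j Hj He. apply (HI1 j ltac:(lia) He). left. apply hideD_delta; auto.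
  - intros E HX. apply (HI2 E). rewrite inlab_last. right. exact HX.
  - intros E HX. apply (HI3 E). right. exact HX.
Qed.

(* the largest set of actions PIPE can refuse in a time step *)
Definition pipe_refusal (N : nat) (c : config) : ASet := fun b =>
  ~ (b = act_in /\ c (S N) = Cell false true) /\ ~ (b = act_out /\ c 0 = Cell true true).

Lemma pipe_tstep_ex N c : (forall j, j <= N -> ~ urgent_transfer c j) ->
  tstep (pipe N c) (pipe_refusal N c) (pipe N (ripen_all c)).
Proof.
  intro HE. apply ts_rel.
  eapply tstep_antitone; [apply chain_tstep_ex; [lia | intros j Hj; apply HE; lia] |].
  intros b Hb. unfold chain_refusal. rewrite inlab_last.
  split; intros [-> E]; destruct Hb as [Hb | Hb]; simpl in Hb; try discriminate;
    [apply (proj1 Hb) | apply (proj2 Hb)]; auto.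
Qed.

Lemma pipe_shift_ex N c j : j <= N -> full (c j) = false -> full (c (S j)) = true ->
  astep (pipe N c) tau (pipe N (shift c j)).
Proof.
  intros Hj H1 H2. rewrite <- (hideD_delta N j Hj). apply as_rel.
  apply chain_shift_ex; auto; lia.
Qed.

Lemma pipe_in_ex N c : full (c (S N)) = false ->
  astep (pipe N c) (vis act_in) (pipe N (upd c (S N) (Cell true false))).
Proof.
  intros H. change (vis act_in) with (hideD N (vis act_in)). apply as_rel.
  rewrite <- (inlab_last N). apply chain_in_ex; auto.
Qed.

Lemma pipe_out_ex N c : full (c 0) = true ->
  astep (pipe N c) (vis act_out) (pipe N (upd c 0 (Cell false false))).
Proof.
  intros H. change (vis act_out) with (hideD N (vis act_out)). apply as_rel.
  apply chain_out_ex; auto.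
Qed.

(* A user in phase 0 wants to input, in phase 1 to output, and in any later
   phase it only offers the success action omega. *)
Definition user (p : nat) : Proc :=
  match p with
  | 0 => user1
  | 1 => Pre true (vis act_out) (Pre true (vis omega) Nil)
  | _ => Pre true (vis omega) Nil
  end.

Definition user_action (p : nat) : Act :=
  match p with 0 => act_in | 1 => act_out | _ => omega end.

Fixpoint users (l : list nat) : Proc :=
  match l with
  | [] => Nil
  | p :: l' => match l' with [] => user p | _ => Par onlyOmega (users l') (user p) end
  end.

Lemma users_cons p l : l <> [] -> users (p :: l) = Par onlyOmega (users l) (user p).
Proof. destruct l; [congruence | reflexivity]. Qed.

Lemma U_users n : 1 <= n -> U n = users (repeat 0 n).
Proof.
  induction n as [|n IH]; intro H; [lia |]. destruct n; [reflexivity |].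
  change (U (S (S n))) with (Par onlyOmega (U (S n)) user1).
  rewrite IH by lia. reflexivity.
Qed.

Definition advance (k : nat) (l l' : list nat) : Prop :=
  exists l1 l2, l = l1 ++ k :: l2 /\ l' = l1 ++ S k :: l2.

Lemma advance_cons p k l l' : advance k l l' -> advance k (p :: l) (p :: l').
Proof. intros (l1 & l2 & -> & ->). exists (p :: l1), l2. auto. Qed.

Lemma advance_head k l : advance k (k :: l) (S k :: l).
Proof. exists [], l. auto. Qed.

Lemma advance_nonempty k l l' : advance k l l' -> l' <> [].
Proof. intros (l1 & l2 & _ & ->). destruct l1; discriminate. Qed.

Definition count (k : nat) (l : list nat) : nat := count_occ Nat.eq_dec l k.

Lemma advance_count k l l' j : advance k l l' ->
  count j l' + (if j =? k then 1 else 0) = count j l + (if j =? S k then 1 else 0).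
Proof.
  intros (l1 & l2 & -> & ->). unfold count. rewrite !count_occ_app.
  destruct (Nat.eqb_spec j k) as [Hk | Hk], (Nat.eqb_spec j (S k)) as [Hs | Hs];
    try lia;
    repeat first [rewrite count_occ_cons_eq by lia | rewrite count_occ_cons_neq by lia];
    lia.
Qed.

Lemma count_In k l : In k l <-> 1 <= count k l.
Proof. unfold count. rewrite (count_occ_In Nat.eq_dec). lia. Qed.

Lemma advance_counts_in l l' : advance 0 l l' ->
  count 0 l = S (count 0 l') /\ count 1 l' = S (count 1 l).
Proof.
  intro H. pose proof (advance_count 0 l l' 0 H). pose proof (advance_count 0 l l' 1 H).
  simpl in *. lia.
Qed.

Lemma advance_counts_out l l' : advance 1 l l' ->
  count 1 l = S (count 1 l') /\ count 0 l' = count 0 l.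
Proof.
  intro H. pose proof (advance_count 1 l l' 0 H). pose proof (advance_count 1 l l' 1 H).
  simpl in *. lia.
Qed.

Lemma user_astep p a P' : astep (user p) a P' ->
  a = vis omega \/ (p <= 1 /\ a = vis (user_action p) /\ P' = user (S p)).
Proof. destruct p as [|[|p]]; simpl; intro H; inversion H; subst; auto. Qed.

Lemma user_astep_ex p : p <= 1 -> astep (user p) (vis (user_action p)) (user (S p)).
Proof. intro H. destruct p as [|[|p]]; try lia; apply as_pre. Qed.

Lemma user_tstep p (X : ASet) P' :
  tstep (user p) X P' <-> P' = user p /\ ~ X (user_action p).
Proof.
  split.
  - destruct p as [|[|p]]; simpl; intro H; inversion H; subst; auto.
  - intros [-> H]. destruct p as [|[|p]]; apply ts_urg; try discriminate; exact H.
Qed.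

Lemma users_astep l a P' : astep (users l) a P' ->
  a = vis omega \/
  exists k l', k <= 1 /\ a = vis (user_action k) /\ P' = users l' /\ advance k l l'.
Proof.
  revert a P'. induction l as [|p l IH]; intros a P' H; [inversion H |].
  destruct l as [|q l1].
  - apply user_astep in H as [-> | (Hp & -> & ->)]; [auto |].
    right. exists p, [S p]. repeat split; auto. apply advance_head.
  - rewrite users_cons in H by discriminate.
    inversion H as [| | | ? ? ? P1' ? _ H1 | ? ? ? P1' ? _ H1 | ? b ? ? ? ? Hb _ _ | |];
      subst.
    + apply IH in H1 as [-> | (k & l' & Hk & -> & -> & Ha)]; [auto |].
      right. exists k, (p :: l'). repeat split; auto.
      * symmetry. apply users_cons, (advance_nonempty k _ _ Ha).
      * apply advance_cons; auto.
    + apply user_astep in H1 as [-> | (Hp & -> & ->)]; [auto |].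
      right. exists p, (S p :: q :: l1). repeat split; auto. apply advance_head.
    + left. unfold onlyOmega in Hb. congruence.
Qed.

Lemma users_astep_ex l k : k <= 1 -> In k l ->
  exists l', astep (users l) (vis (user_action k)) (users l') /\ advance k l l'.
Proof.
  intros Hk. induction l as [|p l IH]; intro Hin; [destruct Hin |].
  destruct (Nat.eq_dec p k) as [-> | Hpk].
  - exists (S k :: l). split; [| apply advance_head].
    destruct l as [|q l1]; [apply user_astep_ex; auto |].
    rewrite !users_cons by discriminate. apply as_parr; [| apply user_astep_ex; auto].
    destruct k as [|[|k]]; try lia; simpl; discriminate.
  - destruct Hin as [E | Hin]; [congruence |].
    destruct (IH Hin) as (l' & Ha & Hadv).
    exists (p :: l'). split; [| apply advance_cons; auto].
    destruct l as [|q l1]; [destruct Hin |].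
    rewrite (users_cons p (q :: l1)), (users_cons p l') by
      (discriminate || apply (advance_nonempty k _ _ Hadv)).
    apply as_parl; auto. destruct k as [|[|k]]; try lia; simpl; discriminate.
Qed.

Definition all_done (l : list nat) : Prop := forall p, In p l -> 2 <= p.

Lemma all_done_intro l : ~ In 0 l -> ~ In 1 l -> all_done l.
Proof. intros H0 H1 p Hp. destruct p as [|[|p]]; [contradiction | contradiction | lia]. Qed.

Lemma users_tstep l (X : ASet) P' : tstep (users l) X P' ->
  P' = users l /\ (In 0 l -> ~ X act_in) /\ (In 1 l -> ~ X act_out) /\
  (l <> [] -> all_done l -> ~ X omega).
Proof.
  revert X P'. induction l as [|p l IH]; intros X P' H.
  - inversion H; subst. simpl. repeat split; tauto.
  - destruct l as [|q l1].
    + apply user_tstep in H as [-> H]. simpl. repeat split.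
      * intros [-> | []]. exact H.
      * intros [-> | []]. exact H.
      * intros _ Hall. specialize (Hall p (or_introl eq_refl)).
        destruct p as [|[|p]]; try lia. exact H.
    + rewrite users_cons in H by discriminate.
      inversion H as [| | | ? ? X1 X2 ? ? ? ? H1 H2 HX | | |]; subst.
      apply IH in H1 as (-> & HI1 & HI2 & HI3).
      apply user_tstep in H2 as (-> & HU).
      rewrite (users_cons p (q :: l1)) by discriminate. unfold onlyOmega in HX.
      repeat split.
      * intros [-> | Hin] HXi; destruct (HX _ HXi) as [[? _] | (HX1 & HX2 & _)];
          try discriminate; [exact (HU HX2) | exact (HI1 Hin HX1)].
      * intros [-> | Hin] HXi; destruct (HX _ HXi) as [[? _] | (HX1 & HX2 & _)];
          try discriminate; [exact (HU HX2) | exact (HI2 Hin HX1)].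
      * intros _ Hall HXo.
        destruct (HX _ HXo) as [[_ [HX1 | HX2]] | (_ & _ & Hn)]; [| | exact (Hn eq_refl)].
        -- apply (HI3 ltac:(discriminate)); auto. intros x Hx; apply Hall; right; auto.
        -- specialize (Hall p (or_introl eq_refl)). destruct p as [|[|p]]; try lia.
           exact (HU HX2).
Qed.

(* the largest set of actions the users can refuse in a time step *)
Definition users_refusal (l : list nat) : ASet := fun b =>
  ~ (b = act_in /\ In 0 l) /\ ~ (b = act_out /\ In 1 l) /\ ~ (b = omega /\ all_done l).

Lemma users_tstep_ex l : l <> [] -> tstep (users l) (users_refusal l) (users l).
Proof.
  induction l as [|p l IH]; intro Hne; [congruence |].
  destruct l as [|q l1].
  - apply user_tstep. split; [reflexivity |]. unfold users_refusal. intros (H1 & H2 & H3).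
    destruct p as [|[|p]]; simpl in *.
    + apply H1; auto.
    + apply H2; auto.
    + apply H3. split; auto. intros x [<- | []]; lia.
  - rewrite users_cons by discriminate.
    apply ts_par with (X1 := users_refusal (q :: l1)) (X2 := fun b => b <> user_action p).
    + apply IH. discriminate.
    + apply user_tstep. auto.
    + intros b (H1 & H2 & H3). unfold onlyOmega.
      destruct (classic (b = omega)) as [-> | Hb].
      * left. split; auto.
        destruct (classic (all_done (q :: l1))) as [Hall | Hn].
        -- right. intro E. apply H3. split; auto. intros x [<- | Hx]; auto.
           destruct p as [|[|p]]; simpl in E; try discriminate; lia.
        -- left. unfold users_refusal. repeat split; try (intros [? ?]; discriminate).
           intros [_ Ha]. auto.
      * right. split; [| split; auto].
        -- unfold users_refusal. repeat split.
           ++ intros [-> Hi]. apply H1. split; auto. right; auto.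
           ++ intros [-> Hi]. apply H2. split; auto. right; auto.
           ++ intros [-> _]. auto.
        -- intro E. destruct p as [|[|p]]; simpl in E; subst.
           ++ apply H1. split; auto. left; auto.
           ++ apply H2. split; auto. left; auto.
           ++ auto.
Qed.

Definition system (N : nat) (c : config) (l : list nat) : Proc := parT (pipe N c) (users l).

Lemma system_initial N n : 1 <= n -> parT (PIPE N) (U n) = system N empty_config (repeat 0 n).
Proof. intro H. unfold system. rewrite PIPE_empty, U_users by auto. reflexivity. Qed.

Lemma system_astep N c l a P' : astep (system N c l) a P' -> a <> vis omega ->
  (exists j, j <= N /\ full (c j) = false /\ full (c (S j)) = true /\
     a = tau /\ P' = system N (shift c j) l) \/
  (exists l', full (c (S N)) = false /\ a = vis act_in /\
     P' = system N (upd c (S N) (Cell true false)) l' /\ advance 0 l l') \/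
  (exists l', full (c 0) = true /\ a = vis act_out /\
     P' = system N (upd c 0 (Cell false false)) l' /\ advance 1 l l').
Proof.
  unfold system, parT. intros H Ho.
  inversion H as [| | | ? ? ? ? ? Hn H1 | ? ? ? ? ? Hn H1 | ? b ? ? ? ? _ H1 H2 | |]; subst.
  - apply pipe_astep in H1 as [(j & Hj & F1 & F2 & -> & ->) | [(_ & -> & _) | (_ & -> & _)]].
    + left. exists j. auto.
    + exfalso. apply Hn. simpl. unfold notOmega. discriminate.
    + exfalso. apply Hn. simpl. unfold notOmega. discriminate.
  - apply users_astep in H1 as [-> | (k & l' & Hk & -> & _)]; [congruence |].
    exfalso. apply Hn. simpl. unfold notOmega. destruct k as [|[|k]]; try lia; discriminate.
  - apply users_astep in H2 as [E | (k & l' & Hk & E & -> & Hadv)]; [congruence |].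
    injection E as ->.
    apply pipe_astep in H1 as [(_ & _ & _ & _ & E & _) | [(F & E & ->) | (F & E & ->)]];
      [discriminate | |]; injection E as E; destruct k as [|[|k]]; try lia; try discriminate.
    + right; left. exists l'. auto.
    + right; right. exists l'. auto.
Qed.

(* A full time step needs that no urgent action is enabled and that some
   user has not succeeded yet (otherwise omega would be urgent). *)
Definition can_idle (N : nat) (c : config) (l : list nat) : Prop :=
  (forall j, j <= N -> ~ urgent_transfer c j) /\
  ~ (c (S N) = Cell false true /\ In 0 l) /\
  ~ (c 0 = Cell true true /\ In 1 l) /\
  ~ all_done l.

Lemma system_fstep N c l P' : l <> [] -> fstep (system N c l) P' ->
  P' = system N (ripen_all c) l /\ can_idle N c l.
Proof.
  unfold fstep, system, parT. intros Hne H.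
  inversion H as [| | | ? ? X1 X2 ? ? ? ? H1 H2 HX | | |]; subst.
  apply pipe_tstep in H1 as (-> & HP1 & HP2 & HP3).
  apply users_tstep in H2 as (-> & HU1 & HU2 & HU3).
  unfold notOmega in HX. repeat split; auto.
  - intros [E Hi]. destruct (HX act_in I) as [[_ [HX1 | HX2]] | (_ & _ & Hn)].
    + exact (HP2 E HX1).
    + exact (HU1 Hi HX2).
    + apply Hn. discriminate.
  - intros [E Hi]. destruct (HX act_out I) as [[_ [HX1 | HX2]] | (_ & _ & Hn)].
    + exact (HP3 E HX1).
    + exact (HU2 Hi HX2).
    + apply Hn. discriminate.
  - intros Hall. destruct (HX omega I) as [[Hn _] | (_ & HX2 & _)].
    + apply Hn. reflexivity.
    + exact (HU3 Hne Hall HX2).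
Qed.

Lemma system_fstep_ex N c l : l <> [] -> can_idle N c l ->
  fstep (system N c l) (system N (ripen_all c) l).
Proof.
  intros Hne (HE & Hin & Hout & Hom). unfold fstep, system, parT.
  apply ts_par with (X1 := pipe_refusal N c) (X2 := users_refusal l).
  - apply pipe_tstep_ex. exact HE.
  - apply users_tstep_ex. exact Hne.
  - intros b _. unfold notOmega, pipe_refusal, users_refusal.
    destruct (classic (b = omega)) as [-> | Hb].
    + right. repeat split; try (intros [? ?]; discriminate); auto.
      intros [_ Ha]. auto.
    + left. split; auto.
      destruct (classic (b = act_in)) as [-> | Hb1];
        [destruct (classic (c (S N) = Cell false true)) as [E | E] |
         destruct (classic (b = act_out)) as [-> | Hb2];
         [destruct (classic (c 0 = Cell true true)) as [E | E] |]].
      * right. repeat split; try (intros [? ?]; discriminate).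
        intros [_ Hi]. apply Hin. auto.
      * left. split; intros [? ?]; [auto | discriminate].
      * right. repeat split; try (intros [? ?]; discriminate).
        intros [_ Hi]. apply Hout. auto.
      * left. split; intros [? ?]; [discriminate | auto].
      * left. split; intros [? ?]; auto.
Qed.

Lemma system_shift_ex N c l j : j <= N -> full (c j) = false -> full (c (S j)) = true ->
  astep (system N c l) tau (system N (shift c j) l).
Proof. intros. apply as_parl; [simpl; auto |]. apply pipe_shift_ex; auto. Qed.

Lemma system_in_ex N c l : full (c (S N)) = false -> In 0 l ->
  exists l', astep (system N c l) (vis act_in) (system N (upd c (S N) (Cell true false)) l') /\
             advance 0 l l'.
Proof.
  intros H Hi. destruct (users_astep_ex l 0 ltac:(lia) Hi) as (l' & Ha & Hs).
  exists l'. split; auto. apply as_sync; [unfold notOmega; discriminate | |].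
  - apply pipe_in_ex; auto.
  - exact Ha.
Qed.

Lemma system_out_ex N c l : full (c 0) = true -> In 1 l ->
  exists l', astep (system N c l) (vis act_out) (system N (upd c 0 (Cell false false)) l') /\
             advance 1 l l'.
Proof.
  intros H Hi. destruct (users_astep_ex l 1 ltac:(lia) Hi) as (l' & Ha & Hs).
  exists l'. split; auto. apply as_sync; [unfold notOmega; discriminate | |].
  - apply pipe_out_ex; auto.
  - exact Ha.
Qed.

Fixpoint sum_below (f : nat -> nat) (k : nat) : nat :=
  match k with 0 => 0 | S k' => sum_below f k' + f k' end.

Fixpoint max_below (f : nat -> nat) (k : nat) : nat :=
  match k with 0 => 0 | S k' => Nat.max (max_below f k') (f k') end.

Lemma sum_below_mono f g k : (forall i, i < k -> f i <= g i) -> sum_below f k <= sum_below g k.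
Proof.
  induction k; intro H; simpl; [lia |].
  specialize (IHk ltac:(intros; apply H; lia)). specialize (H k ltac:(lia)). lia.
Qed.

Lemma sum_below_ext f g k : (forall i, i < k -> f i = g i) -> sum_below f k = sum_below g k.
Proof.
  intro H. apply Nat.le_antisymm; apply sum_below_mono; intros i Hi; rewrite H; auto.
Qed.

Lemma sum_below_zero f k : (forall i, i < k -> f i = 0) -> sum_below f k = 0.
Proof. induction k; intro H; simpl; auto. rewrite IHk, H; auto. Qed.

Lemma sum_below_upd f g k i0 : i0 < k -> (forall i, i < k -> i <> i0 -> f i = g i) ->
  sum_below f k + g i0 = sum_below g k + f i0.
Proof.
  induction k; intros Hi H; [lia |]. simpl.
  assert (i0 < k \/ i0 = k) as [Hlt | ->] by lia.
  - rewrite (H k) by lia. specialize (IHk Hlt ltac:(intros; apply H; lia)). lia.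
  - rewrite (sum_below_ext f g k) by (intros; apply H; lia). lia.
Qed.

Lemma sum_below_ge f k i : i < k -> f i <= sum_below f k.
Proof.
  induction k; intro H; simpl; [lia |].
  assert (i < k \/ i = k) as [Hlt | ->] by lia; [specialize (IHk Hlt) |]; lia.
Qed.

Lemma sum_below_pos f k : 1 <= sum_below f k -> exists i, i < k /\ 1 <= f i.
Proof.
  induction k; simpl; intro H; [lia |].
  destruct (Nat.eq_dec (f k) 0) as [E | E].
  - destruct IHk as (i & ? & ?); [lia |]. exists i; split; auto.
  - exists k; split; lia.
Qed.

Lemma max_below_ge f k i : i < k -> f i <= max_below f k.
Proof.
  induction k; intro H; simpl; [lia |].
  assert (i < k \/ i = k) as [Hlt | ->] by lia; [specialize (IHk Hlt) |]; lia.
Qed.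

Lemma max_below_le f k B : (forall i, i < k -> f i <= B) -> max_below f k <= B.
Proof.
  induction k; intro H; simpl; [lia |].
  specialize (IHk ltac:(intros; apply H; lia)). specialize (H k ltac:(lia)). lia.
Qed.

Lemma max_below_attained f k : 0 < k -> exists i, i < k /\ max_below f k = f i.
Proof.
  induction k as [|k IH]; intro H; [lia |]. simpl. destruct k.
  - exists 0. simpl. split; auto.
  - destruct IH as (i & Hi & E); [lia |].
    destruct (Nat.le_ge_cases (max_below f (S k)) (f (S k))).
    + exists (S k). split; lia.
    + exists i. split; lia.
Qed.

(* The potential; N is fixed throughout and positions range over 0 .. N+2,
   position N+2 standing for the items not yet input. *)
Section Potential.
Variable N : nat.

Definition occ (s : cell) : nat := if full s then 1 else 0.

Lemma occ_empty s : full s = false -> occ s = 0.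
Proof. unfold occ. intros ->. reflexivity. Qed.

Lemma occ_full s : full s = true -> occ s = 1.
Proof. unfold occ. intros ->. reflexivity. Qed.

Definition items (c : config) : nat := sum_below (fun i => occ (c i)) (S (S N)).

(* The load at position j (0 <= j <= N+2): the a items that have not been
   input yet plus the items in cells j .. N+1, i.e. the items that still have
   to pass from position j towards the exit. *)
Definition load (c : config) (a j : nat) : nat :=
  a + sum_below (fun i => if j <=? i then occ (c i) else 0) (S (S N)).

(* One extra time step can pass at position j while the action moving an item
   into cell j-1 or out of cell j is pending but not yet urgent. *)
Definition slack (c : config) (j : nat) : nat :=
  if (match j with 0 => false | S j' => negb (full (c j')) && negb (urgent (c j')) end) ||
     ((j <=? S N) && full (c j) && negb (urgent (c j)))
  then 1 else 0.

(* The number of time steps that may still pass before the load at position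
   j has left: j steps for the last item to reach the exit, two steps per
   item queued behind it, plus the slack. *)
Definition delay (c : config) (a j : nat) : nat :=
  match load c a j with 0 => 0 | S x => j + 2 * x + slack c j end.

(* The potential of PIPE in configuration c with a inputs still to come: the
   largest delay over all positions.  It is the response performance from
   this state on. *)
Definition pot (c : config) (a : nat) : nat := max_below (delay c a) (S (S (S N))).

Lemma delay_cases c a j : (load c a j = 0 /\ delay c a j = 0) \/
  (1 <= load c a j /\ delay c a j + 2 = j + 2 * load c a j + slack c j).
Proof. unfold delay. destruct (load c a j); [left; auto | right; split; lia]. Qed.

Lemma slack_le c j : slack c j <= 1.
Proof. unfold slack. destruct (_ || _); lia. Qed.

Lemma delay_le_pot c a j : j <= S (S N) -> delay c a j <= pot c a.
Proof. intro H. apply max_below_ge. lia. Qed.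

Lemma load_S c a j : j <= S N -> load c a j = occ (c j) + load c a (S j).
Proof.
  intro Hj. unfold load.
  pose proof (sum_below_upd (fun i => if j <=? i then occ (c i) else 0)
                (fun i => if S j <=? i then occ (c i) else 0) (S (S N)) j ltac:(lia)) as H.
  cbv beta in H. rewrite Nat.leb_refl in H.
  replace (S j <=? j) with false in H by (symmetry; apply Nat.leb_gt; lia).
  enough (sum_below (fun i => if j <=? i then occ (c i) else 0) (S (S N)) + 0 =
          sum_below (fun i => if S j <=? i then occ (c i) else 0) (S (S N)) + occ (c j)) by lia.
  apply H. intros i Hi Hne.
  destruct (Nat.leb_spec j i), (Nat.leb_spec (S j) i); auto; lia.
Qed.

Lemma load_top c a : load c a (S (S N)) = a.
Proof.
  unfold load. rewrite sum_below_zero; [lia |].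
  intros i Hi. destruct (Nat.leb_spec (S (S N)) i); lia.
Qed.

Lemma load_0 c a : load c a 0 = a + items c.
Proof. reflexivity. Qed.

Lemma load_upd c a i0 x j : i0 <= S N ->
  load (upd c i0 x) a j + (if j <=? i0 then occ (c i0) else 0) =
  load c a j + (if j <=? i0 then occ x else 0).
Proof.
  intro Hi. unfold load.
  pose proof (sum_below_upd (fun i => if j <=? i then occ (upd c i0 x i) else 0)
                (fun i => if j <=? i then occ (c i) else 0) (S (S N)) i0 ltac:(lia)) as H.
  cbv beta in H. rewrite upd_eq in H.
  enough (H' : sum_below (fun i => if j <=? i then occ (upd c i0 x i) else 0) (S (S N)) +
               (if j <=? i0 then occ (c i0) else 0) =
               sum_below (fun i => if j <=? i then occ (c i) else 0) (S (S N)) +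
               (if j <=? i0 then occ x else 0)) by lia.
  apply H. intros i _ Hne. rewrite upd_ne; auto.
Qed.

Lemma items_upd c i0 x : i0 <= S N -> items (upd c i0 x) + occ (c i0) = items c + occ x.
Proof.
  intro Hi. pose proof (load_upd c 0 i0 x 0 Hi) as H. rewrite !load_0 in H. exact H.
Qed.

Lemma slack_upd_far c i0 x j : j <> i0 -> j <> S i0 -> slack (upd c i0 x) j = slack c j.
Proof.
  intros H1 H2. unfold slack. destruct j as [|j']; rewrite !upd_ne by lia; reflexivity.
Qed.

Lemma pot_le_local c a c' a' (P : nat -> Prop) :
  (forall j, j <= S (S N) -> ~ P j -> delay c a j = delay c' a' j) ->
  (forall j, j <= S (S N) -> P j -> delay c a j <= pot c' a') ->
  pot c a <= pot c' a'.
Proof.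
  intros Heq Hch. apply max_below_le. intros j Hj.
  destruct (classic (P j)) as [Hp | Hp]; [apply Hch; auto; lia |].
  rewrite Heq by (auto; lia). apply delay_le_pot. lia.
Qed.

Lemma delay_eq c a c' a' j : load c a j = load c' a' j -> slack c j = slack c' j ->
  delay c a j = delay c' a' j.
Proof. intros H1 H2. unfold delay. rewrite H1, H2. reflexivity. Qed.

Section Shift.
Variables (c : config) (a j0 : nat).
Hypotheses (Hj0 : j0 <= N) (Hempty : full (c j0) = false) (Hfull : full (c (S j0)) = true).

Lemma load_shift j : load (shift c j0) a j + (if j =? S j0 then 1 else 0) = load c a j.
Proof.
  unfold shift.
  pose proof (load_upd (upd c j0 (Cell true false)) a (S j0) (Cell false false) j ltac:(lia))
    as E2.
  pose proof (load_upd c a j0 (Cell true false) j ltac:(lia)) as E1.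
  rewrite upd_ne, occ_full in E2 by (auto; lia). rewrite occ_empty in E1 by auto.
  unfold occ in E1, E2; simpl in E1, E2.
  destruct (Nat.leb_spec j (S j0)), (Nat.leb_spec j j0), (Nat.eqb_spec j (S j0)); lia.
Qed.

Lemma slack_shift : slack (shift c j0) j0 = 1 /\ slack (shift c j0) (S j0) = 0 /\
  slack (shift c j0) (S (S j0)) = 1.
Proof.
  unfold slack. repeat split; upd_simpl; simpl.
  - destruct (Nat.leb_spec j0 (S N)); [| lia]. rewrite orb_true_r. reflexivity.
  - rewrite andb_false_r. reflexivity.
Qed.

Lemma delay_shift_far j : j <> j0 -> j <> S j0 -> j <> S (S j0) ->
  delay (shift c j0) a j = delay c a j.
Proof.
  intros J1 J2 J3. apply delay_eq.
  - pose proof (load_shift j) as E. destruct (Nat.eqb_spec j (S j0)); lia.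
  - unfold shift. rewrite !slack_upd_far by lia. reflexivity.
Qed.

Lemma load_around_shift : load c a j0 = load c a (S j0) /\
  load c a (S j0) = 1 + load c a (S (S j0)).
Proof.
  rewrite (load_S c a j0), (load_S c a (S j0)) by lia.
  rewrite occ_empty, occ_full by auto. lia.
Qed.

Lemma pot_shift_le : pot (shift c j0) a <= pot c a.
Proof.
  apply pot_le_local with (P := fun j => j = j0 \/ j = S j0 \/ j = S (S j0)).
  - intros j _ Hj. apply delay_shift_far; auto.
  - intros j _ Hj. eapply Nat.le_trans; [| apply (delay_le_pot c a (S j0)); lia].
    destruct load_around_shift as [L0 L1]. destruct slack_shift as (B0 & B1 & B2).
    pose proof (load_shift j0) as E0. pose proof (load_shift (S j0)) as E1.
    pose proof (load_shift (S (S j0))) as E2.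
    rewrite Nat.eqb_refl in E1.
    rewrite (proj2 (Nat.eqb_neq j0 (S j0))) in E0 by lia.
    rewrite (proj2 (Nat.eqb_neq (S (S j0)) (S j0))) in E2 by lia.
    pose proof (delay_cases c a (S j0)).
    destruct Hj as [-> | [-> | ->]];
      match goal with |- delay _ _ ?j <= _ => pose proof (delay_cases (shift c j0) a j) end;
      lia.
Qed.

Lemma pot_shift_ge : urgent (c j0) = true -> urgent (c (S j0)) = true ->
  pot c a <= pot (shift c j0) a.
Proof.
  intros U0 U1.
  assert (B1 : slack c (S j0) = 0).
  { unfold slack. rewrite Hempty, U0, Hfull, U1. simpl. rewrite andb_false_r. reflexivity. }
  apply pot_le_local with (P := fun j => j = j0 \/ j = S j0 \/ j = S (S j0)).
  - intros j _ Hj. symmetry. apply delay_shift_far; auto.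
  - intros j _ Hj.
    destruct load_around_shift as [L0 L1]. destruct slack_shift as (B0' & B1' & B2').
    pose proof (load_shift j0) as E0. pose proof (load_shift (S (S j0))) as E2.
    rewrite (proj2 (Nat.eqb_neq j0 (S j0))) in E0 by lia.
    rewrite (proj2 (Nat.eqb_neq (S (S j0)) (S j0))) in E2 by lia.
    pose proof (delay_le_pot (shift c j0) a j0 ltac:(lia)).
    pose proof (delay_le_pot (shift c j0) a (S (S j0)) ltac:(lia)).
    pose proof (delay_cases (shift c j0) a j0).
    pose proof (delay_cases (shift c j0) a (S (S j0))).
    destruct Hj as [-> | [-> | ->]];
      match goal with |- delay _ _ ?j <= _ =>
        pose proof (delay_cases c a j); pose proof (slack_le c j) end;
      lia.
Qed.

End Shift.

Lemma load_input c a j : full (c (S N)) = false -> j <= S N ->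
  load (upd c (S N) (Cell true false)) a j = load c (S a) j.
Proof.
  intros H Hj. pose proof (load_upd c a (S N) (Cell true false) j ltac:(lia)) as E.
  rewrite occ_empty in E by auto. rewrite (proj2 (Nat.leb_le j (S N)) Hj) in E.
  unfold occ in E; simpl in E. change (load c (S a) j) with (S (load c a j)). lia.
Qed.

Section Input.
Variables (c : config) (a : nat).
Hypothesis Hempty : full (c (S N)) = false.

Let c' := upd c (S N) (Cell true false).

Lemma delay_input_far j : j <= N -> delay c' a j = delay c (S a) j.
Proof.
  intro Hj. unfold c'. apply delay_eq; [apply load_input; auto; lia | apply slack_upd_far; lia].
Qed.

Lemma input_facts : load c' a (S N) = S a /\ load c' a (S (S N)) = a /\
  load c (S a) (S N) = S a /\ load c (S a) (S (S N)) = S a /\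
  slack c' (S N) = 1 /\ slack c' (S (S N)) = 0.
Proof.
  assert (L : load c (S a) (S N) = S a).
  { rewrite load_S, occ_empty, load_top by (auto; lia). reflexivity. }
  unfold c'. rewrite load_input, !load_top by (auto; lia). repeat split; auto; unfold slack.
  - upd_simpl. rewrite Nat.leb_refl. simpl. rewrite orb_true_r. reflexivity.
  - replace (S (S N) <=? S N) with false by (symmetry; apply Nat.leb_gt; lia).
    upd_simpl.
Qed.

Lemma pot_input_le : pot c' a <= pot c (S a).
Proof.
  apply pot_le_local with (P := fun j => j = S N \/ j = S (S N)).
  - intros j Hj Hn. apply delay_input_far. lia.
  - intros j _ Hj. eapply Nat.le_trans; [| apply (delay_le_pot c (S a) (S (S N))); lia].
    destruct input_facts as (L1 & L2 & L3 & L4 & B1 & B2).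
    pose proof (delay_cases c (S a) (S (S N))).
    destruct Hj as [-> | ->];
      match goal with |- delay _ _ ?j <= _ => pose proof (delay_cases c' a j) end;
      lia.
Qed.

Lemma pot_input_ge : urgent (c (S N)) = true -> pot c (S a) <= pot c' a.
Proof.
  intro U0.
  assert (B : slack c (S (S N)) = 0).
  { unfold slack. replace (S (S N) <=? S N) with false by (symmetry; apply Nat.leb_gt; lia).
    rewrite Hempty, U0. reflexivity. }
  apply pot_le_local with (P := fun j => j = S N \/ j = S (S N)).
  - intros j Hj Hn. symmetry. apply delay_input_far. lia.
  - intros j _ Hj. eapply Nat.le_trans; [| apply (delay_le_pot c' a (S N)); lia].
    destruct input_facts as (L1 & L2 & L3 & L4 & B1 & B2).
    pose proof (delay_cases c' a (S N)).
    destruct Hj as [-> | ->];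
      match goal with |- delay _ _ ?j <= _ =>
        pose proof (delay_cases c (S a) j); pose proof (slack_le c j) end;
      lia.
Qed.

End Input.

Section Output.
Variables (c : config) (a : nat).
Hypothesis Hfull : full (c 0) = true.

Let c' := upd c 0 (Cell false false).

Lemma output_facts : (forall j, 1 <= j -> load c' a j = load c a j) /\
  load c' a 0 = load c a 1 /\ load c a 0 = 1 + load c a 1 /\
  slack c' 0 = 0 /\ slack c' 1 = 1.
Proof.
  assert (Em : forall j, load c' a j + (if j <=? 0 then 1 else 0) = load c a j).
  { intro j. pose proof (load_upd c a 0 (Cell false false) j ltac:(lia)) as E.
    rewrite occ_full in E by auto. unfold occ in E; simpl in E.
    destruct (j <=? 0); unfold c'; lia. }
  assert (L1 : load c a 0 = 1 + load c a 1) by (rewrite load_S, occ_full by (auto; lia); lia).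
  pose proof (Em 0) as E0. simpl in E0.
  split; [intros j Hj; rewrite <- Em; destruct (Nat.leb_spec j 0); lia |].
  split; [lia |]. split; [exact L1 |].
  split; unfold slack, c'; upd_simpl.
Qed.

Lemma pot_output_le : pot c' a <= pot c a.
Proof.
  destruct output_facts as (Em & L0 & L1 & B0 & B1).
  apply pot_le_local with (P := fun j => j = 0 \/ j = 1).
  - intros j _ Hj. apply delay_eq; [apply Em; lia | apply slack_upd_far; lia].
  - intros j _ Hj. eapply Nat.le_trans; [| apply (delay_le_pot c a 0); lia].
    pose proof (delay_cases c a 0).
    destruct Hj as [-> | ->];
      match goal with |- delay _ _ ?j <= _ => pose proof (delay_cases c' a j) end;
      pose proof (Em 1 (le_n 1)); lia.
Qed.

Lemma pot_output_ge : urgent (c 0) = true -> pot c a <= pot c' a.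
Proof.
  intro U0. destruct output_facts as (Em & L0 & L1 & B0 & B1).
  assert (B : slack c 0 = 0) by (unfold slack; rewrite Hfull, U0; reflexivity).
  apply pot_le_local with (P := fun j => j = 0 \/ j = 1).
  - intros j _ Hj. apply delay_eq; [symmetry; apply Em; lia | symmetry; apply slack_upd_far; lia].
  - intros j _ Hj. eapply Nat.le_trans; [| apply (delay_le_pot c' a 1); lia].
    pose proof (delay_cases c' a 1). pose proof (Em 1 (le_n 1)).
    destruct Hj as [-> | ->];
      match goal with |- delay _ _ ?j <= _ =>
        pose proof (delay_cases c a j); pose proof (slack_le c j) end;
      lia.
Qed.

End Output.

Lemma slack_ripen c j : slack (ripen_all c) j = 0.
Proof. unfold slack, ripen_all, ripen. destruct j; simpl; rewrite !andb_false_r; reflexivity. Qed.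

Lemma pot_time_le c a : pot c a <= S (pot (ripen_all c) a).
Proof.
  apply max_below_le. intros j Hj.
  pose proof (delay_le_pot (ripen_all c) a j ltac:(lia)).
  pose proof (delay_cases c a j). pose proof (delay_cases (ripen_all c) a j).
  change (load (ripen_all c) a) with (load c a) in *. rewrite slack_ripen in *.
  pose proof (slack_le c j). lia.
Qed.

(* The proof looks at a
   position js where j + 2 * (load - 1) is maximal: the cells around it must
   have a pending non-urgent action, so the slack there is 1. *)
Definition reach (c : config) (a j : nat) : nat :=
  match load c a j with 0 => 0 | S x => S (j + 2 * x) end.

Lemma reach_peak_cells c a js : js <= S (S N) -> 1 <= load c a js ->
  (forall j, j <= S (S N) -> reach c a j <= reach c a js) ->
  (js <= S N -> full (c js) = true) /\ (forall j, js = S j -> full (c j) = false).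
Proof.
  intros Hjs Hl Hmax. split.
  - intros Hle. destruct (full (c js)) eqn:F; auto. exfalso.
    pose proof (load_S c a js Hle) as M. rewrite occ_empty in M by auto.
    specialize (Hmax (S js) ltac:(lia)). unfold reach in Hmax.
    replace (load c a (S js)) with (load c a js) in Hmax by lia.
    destruct (load c a js); lia.
  - intros j ->. destruct (full (c j)) eqn:F; auto. exfalso.
    pose proof (load_S c a j ltac:(lia)) as M. rewrite occ_full in M by auto.
    specialize (Hmax j ltac:(lia)). unfold reach in Hmax. rewrite M in Hmax.
    simpl in Hmax. destruct (load c a (S j)); lia.
Qed.

Lemma slack_at_peak c a js : js <= S (S N) -> 1 <= load c a js ->
  (js <= S N -> full (c js) = true) -> (forall j, js = S j -> full (c j) = false) ->
  (forall j, j <= N -> ~ urgent_transfer c j) -> ~ (c (S N) = Cell false true /\ 1 <= a) ->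
  c 0 <> Cell true true -> slack c js = 1.
Proof.
  intros Hjs Hl HR HL HE Hin Hout. unfold slack. destruct js as [|j].
  - simpl. pose proof (HR ltac:(lia)) as F. rewrite F. simpl.
    destruct (urgent (c 0)) eqn:U; [| reflexivity]. exfalso. apply Hout.
    destruct (c 0); simpl in *; subst; reflexivity.
  - rewrite (HL j eq_refl). simpl.
    destruct (urgent (c j)) eqn:U; [| reflexivity]. simpl.
    destruct (Nat.le_gt_cases j N) as [Hle | Hgt].
    + rewrite HR, (proj2 (Nat.leb_le j N)) by lia. simpl.
      destruct (urgent (c (S j))) eqn:U'; [| reflexivity]. exfalso. apply (HE j Hle).
      unfold urgent_transfer. pose proof (HL j eq_refl). pose proof (HR ltac:(lia)).
      destruct (c j), (c (S j)); simpl in *; subst; auto.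
    + exfalso. assert (j = S N) by lia. subst j. apply Hin. split.
      * pose proof (HL (S N) eq_refl). destruct (c (S N)); simpl in *; subst; auto.
      * rewrite load_top in Hl. exact Hl.
Qed.

Lemma pot_time_drop c a : (forall j, j <= N -> ~ urgent_transfer c j) ->
  ~ (c (S N) = Cell false true /\ 1 <= a) -> c 0 <> Cell true true -> 1 <= a + items c ->
  S (pot (ripen_all c) a) <= pot c a.
Proof.
  intros HE Hin Hout Hpos.
  destruct (max_below_attained (reach c a) (S (S (S N))) ltac:(lia)) as (js & Hjs & Ejs).
  assert (Hmax : forall j, j <= S (S N) -> reach c a j <= reach c a js).
  { intros j Hj. rewrite <- Ejs. apply max_below_ge. lia. }
  assert (Hl : 1 <= load c a js).
  { pose proof (Hmax 0 ltac:(lia)) as H0. unfold reach in H0. rewrite load_0 in H0.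
    destruct (a + items c); [lia |]. unfold reach in H0. destruct (load c a js); lia. }
  destruct (reach_peak_cells c a js ltac:(lia) Hl Hmax) as [HR HL].
  pose proof (slack_at_peak c a js ltac:(lia) Hl HR HL HE Hin Hout) as Hs.
  assert (S (pot (ripen_all c) a) <= reach c a js).
  { unfold reach at 1. destruct (load c a js) as [|x] eqn:Ljs; [lia |].
    apply le_n_S, max_below_le. intros j Hj. specialize (Hmax j ltac:(lia)).
    unfold delay. change (load (ripen_all c) a) with (load c a). rewrite slack_ripen.
    unfold reach in Hmax. rewrite Ljs in Hmax. destruct (load c a j); lia. }
  pose proof (delay_le_pot c a js ltac:(lia)).
  assert (delay c a js = reach c a js) by (unfold delay, reach; destruct (load c a js); lia).
  lia.
Qed.

Lemma pot_empty n : 1 <= n -> pot empty_config n = 2 * n + N + 1.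
Proof.
  intro Hn.
  assert (Em : forall j, load empty_config n j = n).
  { intro j. unfold load. rewrite sum_below_zero; [lia |].
    intros i _. destruct (j <=? i); reflexivity. }
  assert (Eb : forall j, slack empty_config j = if j =? 0 then 0 else 1).
  { intro j. unfold slack. destruct j; reflexivity. }
  apply Nat.le_antisymm.
  - apply max_below_le. intros j Hj. unfold delay. rewrite Em, Eb.
    destruct n; [lia |]. destruct (j =? 0); lia.
  - pose proof (delay_le_pot empty_config n (S (S N)) ltac:(lia)) as H.
    unfold delay in H. rewrite Em, Eb in H. destruct n; [lia |]. simpl in H. lia.
Qed.

Lemma pot_zero c a : a + items c = 0 -> pot c a = 0.
Proof.
  intro H. apply Nat.le_0_r, max_below_le. intros j Hj. unfold delay.
  enough (load c a j = 0) as -> by lia.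
  unfold load. enough (sum_below (fun i => if j <=? i then occ (c i) else 0) (S (S N)) <= items c)
    by lia.
  apply sum_below_mono. intros i _. destruct (j <=? i); lia.
Qed.

End Potential.

(* The invariant of the reachable states of PIPE || U_n: PIPE holds exactly one
   item per user waiting for an output, and there is at least one user. *)
Definition consistent (N : nat) (c : config) (l : list nat) : Prop :=
  items N c = count 1 l /\ l <> [].

(* the potential of a state, with the users in phase 0 still to be served *)
Definition state_pot (N : nat) (c : config) (l : list nat) : nat := pot N c (count 0 l).

Lemma consistent_initial N n : 1 <= n -> consistent N empty_config (repeat 0 n).
Proof.
  intro H. split.
  - unfold count. rewrite count_occ_repeat_neq by lia.
    apply sum_below_zero. intros; reflexivity.
  - destruct n; [lia | discriminate].
Qed.

Lemma items_shift N c j : j <= N -> full (c j) = false -> full (c (S j)) = true ->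
  items N (shift c j) = items N c.
Proof.
  intros Hj H1 H2. pose proof (load_shift N c 0 j Hj H1 H2 0) as E.
  rewrite !load_0 in E. simpl in E. lia.
Qed.

Lemma system_action_pot N c l a P' : consistent N c l -> astep (system N c l) a P' ->
  a <> vis omega ->
  exists c' l', P' = system N c' l' /\ consistent N c' l' /\ state_pot N c' l' <= state_pot N c l.
Proof.
  intros [G1 G2] H Ho. unfold state_pot.
  apply system_astep in H as [(j & Hj & F1 & F2 & _ & ->) |
    [(l' & F & _ & -> & Hadv) | (l' & F & _ & -> & Hadv)]]; auto.
  - exists (shift c j), l. repeat split; auto.
    + rewrite items_shift; auto.
    + apply pot_shift_le; auto.
  - destruct (advance_counts_in l l' Hadv) as [C0 C1].
    pose proof (items_upd N c (S N) (Cell true false) ltac:(lia)) as E.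
    rewrite occ_empty in E by auto.
    exists (upd c (S N) (Cell true false)), l'. repeat split.
    + unfold occ in E. simpl in E. lia.
    + apply (advance_nonempty 0 l l' Hadv).
    + rewrite C0. apply pot_input_le; auto.
  - destruct (advance_counts_out l l' Hadv) as [C1 C0].
    pose proof (items_upd N c 0 (Cell false false) ltac:(lia)) as E.
    rewrite occ_full in E by auto.
    exists (upd c 0 (Cell false false)), l'. repeat split.
    + unfold occ in E. simpl in E. lia.
    + apply (advance_nonempty 1 l l' Hadv).
    + rewrite C0. apply pot_output_le; auto.
Qed.

Lemma idle_pot_drop N c l : consistent N c l -> can_idle N c l ->
  S (state_pot N (ripen_all c) l) <= state_pot N c l.
Proof.
  intros [G1 G2] (HE & Hin & Hout & Hdone). apply pot_time_drop; auto.
  - intros [E Ha]. apply Hin. split; auto. apply count_In. auto.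
  - intro E. apply Hout. split; auto. apply count_In. rewrite <- G1.
    pose proof (sum_below_ge (fun i => occ (c i)) (S (S N)) 0 ltac:(lia)) as Hs.
    unfold items. cbv beta in Hs. rewrite E in Hs. exact Hs.
  - destruct (classic (In 0 l)) as [H0 | H0]; [apply count_In in H0; lia |].
    destruct (classic (In 1 l)) as [H1 | H1]; [apply count_In in H1; lia |].
    exfalso. apply Hdone, all_done_intro; auto.
Qed.

Lemma system_time_pot N c l P' : consistent N c l -> fstep (system N c l) P' ->
  P' = system N (ripen_all c) l /\ S (state_pot N (ripen_all c) l) <= state_pot N c l.
Proof.
  intros G H. apply system_fstep in H as [-> Hidle]; [| apply G].
  split; auto. apply idle_pot_drop; auto.
Qed.

Lemma zeta_app w v : zeta (w ++ v) = zeta w + zeta v.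
Proof. induction w as [|[] w IH]; simpl; auto. Qed.

Lemma trace_time_bound N P v : DL P v -> forall c l, P = system N c l -> consistent N c l ->
  ~ In (DAct omega) v -> zeta v <= state_pot N c l.
Proof.
  induction 1 as [| P P' v H _ IH | P a P' v H _ IH | P P' v H _ IH];
    intros c l -> G Hom; simpl; [lia | | |].
  - destruct (system_action_pot N c l tau P' G H ltac:(discriminate))
      as (c' & l' & -> & G' & Hpot).
    specialize (IH c' l' eq_refl G' Hom). lia.
  - assert (Ha : a <> omega) by (intro E; apply Hom; left; congruence).
    destruct (system_action_pot N c l (vis a) P' G H ltac:(congruence))
      as (c' & l' & -> & G' & Hpot).
    specialize (IH c' l' eq_refl G' ltac:(intro Hi; apply Hom; right; auto)). lia.
  - destruct (system_time_pot N c l P' G H) as [-> Hpot].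
    assert (G' : consistent N (ripen_all c) l) by exact G.
    specialize (IH _ l eq_refl G' ltac:(intro Hi; apply Hom; right; auto)). lia.
Qed.

(* The users can force state_pot time steps by a greedy
   strategy: perform an urgent action while there is one, and let time pass
   otherwise.  Termination is measured by the potential plus a weight that
   decreases whenever an item moves on. *)
Definition weight (N : nat) (c : config) : nat := sum_below (fun i => S i * occ (c i)) (S (S N)).

Lemma weight_upd N c i0 x : i0 <= S N ->
  weight N (upd c i0 x) + S i0 * occ (c i0) = weight N c + S i0 * occ x.
Proof.
  intro Hi. unfold weight.
  pose proof (sum_below_upd (fun i => S i * occ (upd c i0 x i)) (fun i => S i * occ (c i))
    (S (S N)) i0 ltac:(lia) ltac:(intros i _ Hne; cbv beta; rewrite upd_ne; auto)) as H.
  cbv beta in H. rewrite upd_eq in H. lia.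
Qed.

Definition measure (N : nat) (c : config) (l : list nat) : nat :=
  state_pot N c l + (N + 3) * count 0 l + weight N c.

Definition greedy_move (N : nat) (c : config) (l : list nat) (c' : config) (l' : list nat) : Prop :=
  exists w, (forall v, DL (system N c' l') v -> DL (system N c l) (w ++ v)) /\
    ~ In (DAct omega) w /\ consistent N c' l' /\
    state_pot N c l <= zeta w + state_pot N c' l' /\ measure N c' l' < measure N c l.

Lemma greedy_transfer N c l j : consistent N c l -> j <= N -> urgent_transfer c j ->
  greedy_move N c l (shift c j) l.
Proof.
  intros [G1 G2] Hj [E1 E2].
  assert (F1 : full (c j) = false) by (rewrite E1; auto).
  assert (F2 : full (c (S j)) = true) by (rewrite E2; auto).
  pose proof (pot_shift_le N c (count 0 l) j Hj F1 F2).
  pose proof (pot_shift_ge N c (count 0 l) j Hj F1 F2 ltac:(rewrite E1; auto)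
    ltac:(rewrite E2; auto)).
  pose proof (weight_upd N (upd c j (Cell true false)) (S j) (Cell false false) ltac:(lia)) as W2.
  pose proof (weight_upd N c j (Cell true false) ltac:(lia)) as W1.
  rewrite upd_ne, occ_full in W2 by (auto; lia). rewrite occ_empty in W1 by auto.
  unfold occ in W1, W2; simpl in W1, W2. fold (shift c j) in W2.
  exists []. simpl. repeat split; auto.
  - intros v Hv. eapply dl_tau; [apply system_shift_ex; eauto | exact Hv].
  - rewrite items_shift; auto.
  - unfold measure, state_pot. lia.
Qed.

Lemma greedy_input N c l : consistent N c l -> c (S N) = Cell false true -> In 0 l ->
  exists l', greedy_move N c l (upd c (S N) (Cell true false)) l'.
Proof.
  intros [G1 G2] E Hi.
  assert (F : full (c (S N)) = false) by (rewrite E; auto).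
  destruct (system_in_ex N c l F Hi) as (l' & Ha & Hadv).
  destruct (advance_counts_in l l' Hadv) as [C0 C1].
  pose proof (pot_input_le N c (count 0 l') F).
  pose proof (pot_input_ge N c (count 0 l') F ltac:(rewrite E; auto)).
  pose proof (weight_upd N c (S N) (Cell true false) ltac:(lia)) as W.
  pose proof (items_upd N c (S N) (Cell true false) ltac:(lia)) as I.
  rewrite occ_empty in W, I by auto. unfold occ in W, I; simpl in W, I.
  exists l', [DAct act_in]. simpl. repeat split.
  - intros v Hv. eapply dl_vis; eauto.
  - intros [E' | []]; discriminate.
  - lia.
  - apply (advance_nonempty 0 l l' Hadv).
  - unfold state_pot. rewrite C0. lia.
  - unfold measure, state_pot. rewrite C0. lia.
Qed.

Lemma greedy_output N c l : consistent N c l -> c 0 = Cell true true -> In 1 l ->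
  exists l', greedy_move N c l (upd c 0 (Cell false false)) l'.
Proof.
  intros [G1 G2] E Hi.
  assert (F : full (c 0) = true) by (rewrite E; auto).
  destruct (system_out_ex N c l F Hi) as (l' & Ha & Hadv).
  destruct (advance_counts_out l l' Hadv) as [C1 C0].
  pose proof (pot_output_le N c (count 0 l) F).
  pose proof (pot_output_ge N c (count 0 l) F ltac:(rewrite E; auto)).
  pose proof (weight_upd N c 0 (Cell false false) ltac:(lia)) as W.
  pose proof (items_upd N c 0 (Cell false false) ltac:(lia)) as I.
  rewrite occ_full in W, I by auto. unfold occ in W, I; simpl in W, I.
  exists l', [DAct act_out]. simpl. repeat split.
  - intros v Hv. eapply dl_vis; eauto.
  - intros [E' | []]; discriminate.
  - lia.
  - apply (advance_nonempty 1 l l' Hadv).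
  - unfold state_pot. rewrite C0. lia.
  - unfold measure, state_pot. rewrite C0. lia.
Qed.

Lemma greedy_idle N c l : consistent N c l -> can_idle N c l ->
  greedy_move N c l (ripen_all c) l.
Proof.
  intros G Hidle.
  pose proof (idle_pot_drop N c l G Hidle).
  pose proof (pot_time_le N c (count 0 l)).
  exists [DOne]. simpl. repeat split; try apply G.
  - intros v Hv. eapply dl_time; [apply system_fstep_ex; [apply G | exact Hidle] | exact Hv].
  - intros [E' | []]; discriminate.
  - unfold state_pot in *. lia.
  - unfold measure. change (weight N (ripen_all c)) with (weight N c). lia.
Qed.

Lemma greedy_step N c l : consistent N c l -> state_pot N c l <> 0 ->
  exists c' l', greedy_move N c l c' l'.
Proof.
  intros G NZ.
  destruct (classic (exists j, j <= N /\ urgent_transfer c j)) as [(j & Hj & Ht) | NT].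
  { exists (shift c j), l. apply greedy_transfer; auto. }
  destruct (classic (c (S N) = Cell false true /\ In 0 l)) as [[E Hi] | NI].
  { destruct (greedy_input N c l G E Hi) as (l' & Hm). eauto. }
  destruct (classic (c 0 = Cell true true /\ In 1 l)) as [[E Hi] | NO].
  { destruct (greedy_output N c l G E Hi) as (l' & Hm). eauto. }
  exists (ripen_all c), l. apply greedy_idle; auto. repeat split; auto.
  - intros j Hj Ht. apply NT. eauto.
  - intro Hall. apply NZ. unfold state_pot. apply pot_zero.
    destruct G as [G1 _].
    assert (~ In 0 l) by (intro Hi; specialize (Hall 0 Hi); lia).
    assert (~ In 1 l) by (intro Hi; specialize (Hall 1 Hi); lia).
    rewrite count_In in *. lia.
Qed.

Lemma greedy_trace N m c l : measure N c l <= m -> consistent N c l ->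
  exists v, DL (system N c l) v /\ ~ In (DAct omega) v /\ state_pot N c l <= zeta v.
Proof.
  revert c l. induction m as [|m IH]; intros c l Hm G.
  all: destruct (Nat.eq_dec (state_pot N c l) 0) as [Z | NZ];
    [exists []; repeat split; [apply dl_nil | simpl; tauto | simpl; lia] |].
  - unfold measure in Hm. lia.
  - destruct (greedy_step N c l G NZ) as (c' & l' & w & Hext & Hw & G' & Hpot & Hdec).
    destruct (IH c' l' ltac:(lia) G') as (v & Hv & Hom & Hz).
    exists (w ++ v). repeat split; auto.
    + intro Hi. apply in_app_or in Hi as [Hi | Hi]; auto.
    + rewrite zeta_app. lia.
Qed.

Lemma rp_PIPE N n : 1 <= n -> rp (PIPE N) n (fin (2 * n + (N + 1))).
Proof.
  intro Hn. pose proof (consistent_initial N n Hn) as G.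
  assert (Epot : state_pot N empty_config (repeat 0 n) = 2 * n + (N + 1)).
  { unfold state_pot, count. rewrite count_occ_repeat_eq, pot_empty by auto. lia. }
  split.
  - intros k (v & Hv & Ho & <-). rewrite system_initial in Hv by auto.
    rewrite <- Epot. eapply trace_time_bound; eauto.
  - intros r' Hr.
    destruct (greedy_trace N _ empty_config (repeat 0 n) (le_n _) G) as (v & Hv & Ho & Hz).
    rewrite <- system_initial in Hv by auto.
    specialize (Hr (zeta v) (ex_intro _ v (conj Hv (conj Ho eq_refl)))).
    destruct r'; simpl in *; auto. lia.
Qed.

Lemma asymptotic_PIPE N : asymptotic_performance (PIPE N) (2 # 1)%Q.
Proof.
  exists (inject_Z (Z.of_nat (N + 1))), (inject_Z (Z.of_nat (N + 1))), 1.
  split; [unfold Qlt; simpl; lia |].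
  intros n Hn _. exists (2 * n + (N + 1)). split; [apply rp_PIPE; auto |].
  assert (E : (inject_Z (Z.of_nat (2 * n + (N + 1))) - (2 # 1) * inject_Z (Z.of_nat n) ==
               inject_Z (Z.of_nat (N + 1)))%Q).
  { unfold Qeq, Qminus, Qplus, Qmult, Qopp, inject_Z. cbn [Qnum Qden]. lia. }
  rewrite E, Qabs_pos by (unfold Qle; simpl; lia). split; apply Qle_refl.
Qed.

(* Along transitions of PIPE other than in and out the
   measure 3 * weight + (number of non-urgent cells) strictly decreases: a
   transfer lowers the weight by one and refreshes at most two cells, and an
   admissible time step must ripen at least one non-urgent cell, since with all
   cells urgent some urgent action is always enabled in PIPE || U_n. *)
Definition fresh (s : cell) : nat := if urgent s then 0 else 1.

Definition fresh_cells (N : nat) (c : config) : nat := sum_below (fun i => fresh (c i)) (S (S N)).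

Definition cycle_measure (N : nat) (c : config) : nat := 3 * weight N c + fresh_cells N c.

Lemma cycle_measure_ext N c c' : (forall i, i <= S N -> c i = c' i) ->
  cycle_measure N c = cycle_measure N c'.
Proof.
  intro H. unfold cycle_measure, weight, fresh_cells.
  rewrite (sum_below_ext (fun i => S i * occ (c i)) (fun i => S i * occ (c' i))),
    (sum_below_ext (fun i => fresh (c i)) (fun i => fresh (c' i))); auto.
  all: intros i Hi; rewrite H by lia; reflexivity.
Qed.

Lemma cycle_measure_shift N c j : j <= N -> full (c j) = false -> full (c (S j)) = true ->
  cycle_measure N (shift c j) < cycle_measure N c.
Proof.
  intros Hj H0 H1. unfold cycle_measure, fresh_cells, shift.
  set (c1 := upd c j (Cell true false)).
  pose proof (weight_upd N c1 (S j) (Cell false false) ltac:(lia)) as W2.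
  pose proof (weight_upd N c j (Cell true false) ltac:(lia)) as W1.
  pose proof (sum_below_upd (fun i => fresh (upd c1 (S j) (Cell false false) i))
    (fun i => fresh (c1 i)) (S (S N)) (S j) ltac:(lia)
    ltac:(intros i _ Hne; cbv beta; rewrite upd_ne; auto)) as L2.
  pose proof (sum_below_upd (fun i => fresh (c1 i)) (fun i => fresh (c i)) (S (S N)) j ltac:(lia)
    ltac:(intros i _ Hne; cbv beta; unfold c1; rewrite upd_ne; auto)) as L1.
  cbv beta in L1, L2. rewrite upd_eq in L2.
  assert (E1 : c1 (S j) = c (S j)) by (unfold c1; apply upd_ne; lia).
  assert (E0 : c1 j = Cell true false) by (unfold c1; apply upd_eq).
  rewrite E1 in W2, L2. rewrite E0 in L1. fold c1 in W1.
  rewrite occ_full in W2 by auto. rewrite occ_empty in W1 by auto.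
  unfold occ, fresh in *; cbn [full urgent] in *.
  destruct (urgent (c j)), (urgent (c (S j))); lia.
Qed.

Lemma cycle_measure_ripen N c : cycle_measure N (ripen_all c) + fresh_cells N c = cycle_measure N c.
Proof.
  unfold cycle_measure, fresh_cells.
  rewrite (sum_below_zero (fun i => fresh (ripen_all c i))) by (intros; reflexivity).
  change (weight N (ripen_all c)) with (weight N c). lia.
Qed.

Lemma reach_consistent N S T : reach_nw S T -> forall c l, S = system N c l ->
  consistent N c l -> exists c' l', T = system N c' l' /\ consistent N c' l'.
Proof.
  induction 1 as [| S a S' T H Ho _ IH | S S' T H _ IH]; intros c l -> G; eauto.
  - destruct (system_action_pot N c l a S' G H Ho) as (c' & l' & -> & G' & _). eauto.
  - destruct (system_time_pot N c l S' G H) as [-> _]. eapply IH; [reflexivity | exact G].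
Qed.

Lemma joint_reach_consistent N Q0 R : joint_reach (PIPE N) Q0 R ->
  exists c l, Q0 = pipe N c /\ R = users l /\ consistent N c l.
Proof.
  intros (n & Hn & Hr). rewrite system_initial in Hr by auto.
  destruct (reach_consistent N _ _ Hr empty_config (repeat 0 n) eq_refl
    (consistent_initial N n Hn)) as (c & l & E & G).
  unfold system, parT in E. injection E as -> ->. eauto.
Qed.

Lemma cell_proc_inj N i s s' : cell_proc N i s = cell_proc N i s' -> s = s'.
Proof.
  unfold cell_proc, cell_body, C. destruct s as [[] []], s' as [[] []]; intro E;
    first [reflexivity | discriminate].
Qed.

Lemma chain_of_inj N k c c' : chain_of N k c = chain_of N k c' -> forall i, i <= k -> c i = c' i.
Proof.
  induction k as [|k IH]; simpl; intros E i Hi.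
  - assert (i = 0) by lia. subst. apply cell_proc_inj in E; auto.
  - pose proof (f_equal (fun P => match P with Par _ Q _ => Q | _ => Nil end) E) as E1.
    pose proof (f_equal (fun P => match P with Par _ _ Q => Q | _ => Nil end) E) as E2.
    cbv beta iota in E1, E2. apply cell_proc_inj in E2.
    assert (i <= k \/ i = S k) as [Hle | ->] by lia; auto.
Qed.

Lemma pipe_inj N c c' : pipe N c = pipe N c' -> forall i, i <= S N -> c i = c' i.
Proof.
  intro E. apply (chain_of_inj N (S N)).
  exact (f_equal (fun P => match P with Rel _ Q => Q | _ => Nil end) E).
Qed.

Lemma urgent_items_front N c : (forall i, i <= S N -> urgent (c i) = true) ->
  (forall j, j <= N -> ~ urgent_transfer c j) -> 1 <= items N c -> full (c 0) = true.
Proof.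
  intros HU HE Hi. destruct (sum_below_pos _ _ Hi) as (i & Hil & Hv).
  assert (Fi : full (c i) = true) by (unfold occ in Hv; destruct (full (c i)); auto; lia).
  clear Hv Hi. induction i as [|i IH]; auto.
  apply IH; [lia |]. destruct (full (c i)) eqn:F; auto. exfalso. apply (HE i ltac:(lia)).
  unfold urgent_transfer. pose proof (HU i ltac:(lia)). pose proof (HU (S i) ltac:(lia)).
  destruct (c i), (c (S i)); simpl in *; subst; auto.
Qed.

Lemma admissible_time_fresh N c l (X X2 : ASet) Q1 R' :
  consistent N c l -> tstep (pipe N c) X Q1 -> tstep (users l) X2 R' -> full_comb X X2 ->
  fresh_cells N c <> 0.
Proof.
  intros [G1 G2] HP HU Hc Z.
  assert (HUrg : forall i, i <= S N -> urgent (c i) = true).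
  { intros i Hi. pose proof (sum_below_ge (fun i => fresh (c i)) (S (S N)) i ltac:(lia)) as Hs.
    unfold fresh_cells in Z. cbv beta in Hs. unfold fresh in Hs, Z.
    destruct (urgent (c i)); auto; lia. }
  apply pipe_tstep in HP as (_ & HE & HPin & HPout).
  apply users_tstep in HU as (_ & HU0 & HU1 & HU2).
  destruct (Nat.eq_dec (items N c) 0) as [I0 | I0].
  - assert (Ec : c (S N) = Cell false true).
    { pose proof (sum_below_ge (fun i => occ (c i)) (S (S N)) (S N) ltac:(lia)) as Hs.
      unfold items in I0. cbv beta in Hs. pose proof (HUrg (S N) ltac:(lia)) as U.
      assert (O : occ (c (S N)) = 0) by lia. unfold occ in O.
      destruct (c (S N)) as [[] u]; simpl in *; subst; [discriminate | reflexivity]. }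
    destruct (classic (In 0 l)) as [H0 | H0].
    + destruct (Hc act_in) as [[_ [HX | HX]] | (_ & _ & Hb)];
        [exact (HPin Ec HX) | exact (HU0 H0 HX) | discriminate].
    + assert (~ In 1 l) by (rewrite count_In; lia).
      destruct (Hc omega) as [[Hb _] | (_ & HX & _)];
        [exact (Hb eq_refl) | exact (HU2 G2 (all_done_intro l H0 H) HX)].
  - assert (F0 : full (c 0) = true) by (apply (urgent_items_front N c); auto; lia).
    assert (Ec : c 0 = Cell true true).
    { pose proof (HUrg 0 ltac:(lia)). destruct (c 0); simpl in *; subst; auto. }
    assert (H1 : In 1 l) by (rewrite count_In; lia).
    destruct (Hc act_out) as [[_ [HX | HX]] | (_ & _ & Hb)];
      [exact (HPout Ec HX) | exact (HU1 H1 HX) | discriminate].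
Qed.

Lemma admissible_decreases N Q0 lb Q1 : admissible (PIPE N) Q0 lb Q1 -> ~ is_inout lb ->
  forall c, Q0 = pipe N c -> exists c', Q1 = pipe N c' /\ cycle_measure N c' < cycle_measure N c.
Proof.
  intros Had Hio c ->. destruct lb as [a | X]; simpl in Had.
  - destruct Had as [Ha _].
    apply pipe_astep in Ha as [(j & Hj & K1 & K2 & -> & ->) | [(_ & -> & _) | (_ & -> & _)]].
    + exists (shift c j). split; auto. apply cycle_measure_shift; auto.
    + exfalso. apply Hio. left. reflexivity.
    + exfalso. apply Hio. right. reflexivity.
  - destruct Had as [Ht (R & X2 & R' & Hj & HR & Hc)].
    destruct (joint_reach_consistent N _ _ Hj) as (c0 & l & E & -> & G).
    rewrite E in Ht. pose proof (pipe_inj N c c0 E) as Ecc.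
    pose proof (admissible_time_fresh N c0 l X X2 Q1 R' G Ht HR Hc).
    apply pipe_tstep in Ht as (-> & _).
    exists (ripen_all c0). split; auto.
    rewrite (cycle_measure_ext N c c0) by auto. pose proof (cycle_measure_ripen N c0). lia.
Qed.

Lemma apath_decreases N A ls B : apath (PIPE N) A ls B -> ls <> [] ->
  (forall lb, In lb ls -> ~ is_inout lb) ->
  forall c, A = pipe N c -> exists c', B = pipe N c' /\ cycle_measure N c' < cycle_measure N c.
Proof.
  induction 1 as [| A l Q1 ls B Had Hpath IH]; intros Hne Hio c EA; [congruence |].
  destruct (admissible_decreases N _ _ _ Had (Hio l (or_introl eq_refl)) c EA) as (c1 & E1 & P1).
  destruct ls as [|l' ls].
  - inversion Hpath; subst. eauto.
  - destruct (IH ltac:(discriminate) ltac:(intros lb Hlb; apply Hio; right; auto) c1 E1)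
      as (c2 & E2 & P2).
    exists c2. split; auto. lia.
Qed.

Lemma no_catastrophic_cycle N : ~ has_catastrophic_cycle (PIPE N).
Proof.
  intros (Q0 & pre & ls & _ & Hc & (lb & Hlb & _) & Hio).
  destruct ls as [|l0 ls']; [destruct Hlb |].
  assert (Hj : exists R, joint_reach (PIPE N) Q0 R).
  { inversion Hc as [| ? ? ? ? ? Had _]; subst.
    destruct l0; simpl in Had; destruct Had as [_ Had];
      [destruct Had as (R & ? & _) | destruct Had as (R & _ & _ & ? & _)]; eauto. }
  destruct Hj as (R & Hj). destruct (joint_reach_consistent N _ _ Hj) as (c & l & EQ & _ & _).
  destruct (apath_decreases N _ _ _ Hc ltac:(discriminate) Hio c EQ) as (c' & E' & P').
  rewrite EQ in E'. rewrite (cycle_measure_ext N c' c) in P'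
    by (intros; symmetry; apply (pipe_inj N c c'); auto).
  lia.
Qed.

Theorem mainTheorem2 (N : nat) (HN : 1 <= N) :
  ~ has_catastrophic_cycle (PIPE N) /\
  asymptotic_performance (PIPE N) (2 # 1)%Q /\
  (forall n : nat, 1 <= n -> rp (PIPE N) n (fin (2 * n + (N + 1)))).
Proof.
  split; [apply no_catastrophic_cycle |].
  split; [apply asymptotic_PIPE |].
  apply rp_PIPE.
Qed.
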